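(* Let $N\ge2$, $T=\{x\in\mathbb{R}^N:1<|x|<2\}$, $2<p<2^*$ ($2^*=\frac{2N}{N-2}$ if $N\ge3$, $+\infty$ if $N=2$), and for $\lambda>0$ let $u_\lambda$ be the unique positive solution in $H^1_{0,rad}(T)$ of $-\Delta u+\lambda u=u^{p-1}$ in $T$, $u=0$ on $\partial T$. Then as $\lambda\to+\infty$: (1) if $N=2$ and $p<6$, or $N\ge3$, then $\int_T u_\lambda^2\to+\infty$; (2) if $N=2$ and $p=6$, then $\liminf_{\lambda\to+\infty}\int_T u_\lambda^2\in(0,+\infty)$; (3) if $N=2$ and $p>6$, then $\int_T u_\lambda^2\to0$. *)

From Stdlib Require Import Reals.
From Coquelicot Require Import Coquelicot.
Open Scope R_scope.

(* A radial function u(x) = v(|x|) on the annulus T = {1 < |x| < 2} in R^N.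
   [radial_pos_solution N p lam v]: v is a positive classical solution of the
   radial form of  -Delta u + lam u = u^(p-1) in T,  u = 0 on dT:
     -(v'' + (N-1)/r v') + lam v = v^(p-1)  on (1,2),   v(1) = v(2) = 0,
   with v continuous on [1,2] and twice differentiable on (1,2). *)
Definition radial_pos_solution (N : nat) (p lam : R) (v : R -> R) : Prop :=
  (forall r, 1 <= r <= 2 ->
     filterlim v (within (fun x => 1 <= x <= 2) (locally r)) (locally (v r))) /\
  v 1 = 0 /\ v 2 = 0 /\
  (forall r, 1 < r < 2 ->
     0 < v r /\ ex_derive v r /\ ex_derive (Derive v) r /\
     - (Derive (Derive v) r + (INR N - 1) / r * Derive v r) + lam * v r
       = Rpower (v r) (p - 1)).

(* int_T u^2 dx = |S^{N-1}| * int_1^2 v(r)^2 r^(N-1) dr ; we keep the radial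
   integral, the positive constant |S^{N-1}| does not affect the claims. *)
Definition radial_mass (N : nat) (v : R -> R) : R :=
  RInt (fun r => (v r) ^ 2 * r ^ (N - 1)) 1 2.

Definition liminf_pinfty_is (f : R -> R) (l : R) : Prop :=
  (forall eps, 0 < eps -> exists M, forall lam, M < lam -> l - eps < f lam) /\
  (forall eps, 0 < eps -> forall M, exists lam, M < lam /\ f lam < l + eps).

(* Writing v = L^(1/(p-2)) w turns the equation into
   w'' + (N-1)/r w' = L (w - w^(p-1)) and gives
   radial_mass N v = L^(2/(p-2)) * int_1^2 w^2 r^(N-1) dr, so it suffices to show
   that the last integral is of exact order L^(-1/2): the mass then behaves like
   L^(2/(p-2) - 1/2), whose exponent is positive, zero or negative according as
   p < 6, p = 6 or p > 6 (for N >= 3, subcriticality gives p < 6).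

   The energy w'^2/2 + L (w^p/p - w^2/2) is nonincreasing and bounded below near
   r = 2 by -L w^2/2 -> 0, hence nonnegative; so every critical point of w is a
   strict local maximum, and w increases to a single maximum W > 1 and then
   decreases. Lower bound (p <= 6): the flux r^(N-1) w' vanishes at the maximum
   and varies at rate O(L W^(p-1)), so w >= W/2 on an interval of length
   (2^N L W^(p-2))^(-1/2) >= c W^(-2) L^(-1/2), which carries mass >= c' L^(-1/2).
   Upper bound: below a fixed level slightly above 1, nonnegativity of the
   energy gives |w'| >= c sqrt L w, so w decays exponentially on both sides;
   above that level the flux decreases at rate >= c L while |w'| = O(sqrt L)
   (the energy grows at most by the factor exp(2(N-1)) across the damping term),
   so this plateau has length O(L^(-1/2)). This needs W bounded: if W were large,
   the same two estimates at the level level_ratio * W would make [1, 2] too short,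
   i.e. force sqrt L to be bounded. *)

From Stdlib Require Import Reals Lra Lia Classical.
From Coquelicot Require Import Coquelicot.
Open Scope R_scope.

Lemma Rpower_pos (x e : R) : 0 < Rpower x e.
Proof. apply exp_pos. Qed.

Lemma Rpower_1_plus (x e : R) : 0 < x -> Rpower x (1 + e) = x * Rpower x e.
Proof. intros Hx. rewrite Rpower_plus, Rpower_1 by exact Hx. reflexivity. Qed.

Lemma Rpower_2_plus (x e : R) : 0 < x -> Rpower x (2 + e) = x ^ 2 * Rpower x e.
Proof.
  intros Hx. rewrite Rpower_plus. f_equal.
  replace 2 with (INR 2) by (simpl; ring). apply Rpower_pow, Hx.
Qed.

Lemma Rpower_ge_1 (x e : R) : 1 <= x -> 0 <= e -> 1 <= Rpower x e.
Proof. intros Hx He. rewrite <- (Rpower_O x) by lra. apply Rle_Rpower; lra. Qed.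

Lemma Rpower_base_1 (e : R) : Rpower 1 e = 1.
Proof. unfold Rpower. rewrite ln_1, Rmult_0_r. apply exp_0. Qed.

Lemma Rpower_Rinv_r (x e : R) : 0 < x -> e <> 0 -> Rpower (Rpower x (/ e)) e = x.
Proof.
  intros Hx He. rewrite Rpower_mult, Rinv_l by exact He. apply Rpower_1, Hx.
Qed.

Lemma Rpower_lt_base (x y e : R) :
  0 < x -> 0 < y -> 0 < e -> Rpower x e < Rpower y e -> x < y.
Proof.
  intros Hx Hy He H. destruct (Rle_lt_dec y x) as [Hle|]; [|assumption].
  assert (Rpower y e <= Rpower x e) by (apply Rle_Rpower_l; lra). lra.
Qed.

Lemma Rpower_gt_1_base (x e : R) : 0 < x -> 0 < e -> 1 < Rpower x e -> 1 < x.
Proof.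
  intros Hx He H. apply (Rpower_lt_base _ _ e); [lra|lra|lra|].
  rewrite Rpower_base_1. exact H.
Qed.

Lemma Derive_Rpower (x e : R) : 0 < x -> Derive (fun y => Rpower y e) x = e * Rpower x (e - 1).
Proof. intros Hx. apply is_derive_unique, is_derive_Reals, derivable_pt_lim_power, Hx. Qed.

Lemma ex_derive_Rpower (x e : R) : 0 < x -> ex_derive (fun y => Rpower y e) x.
Proof.
  intros Hx. exists (e * Rpower x (e - 1)).
  apply is_derive_Reals, derivable_pt_lim_power, Hx.
Qed.

Lemma sub_Rpower_antitone (x y e : R) : 0 <= e -> 1 <= x <= y ->
  y - Rpower y (1 + e) <= x - Rpower x (1 + e).
Proof.
  intros He Hxy. rewrite !Rpower_1_plus by lra.
  assert (Rpower x e <= Rpower y e) by (apply Rle_Rpower_l; lra).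
  assert (1 <= Rpower x e) by (apply Rpower_ge_1; lra).
  nra.
Qed.

Lemma abs_sub_Rpower_le (x W e : R) : 0 < x <= W -> 1 <= W -> 0 <= e ->
  Rabs (x - Rpower x (1 + e)) <= Rpower W (1 + e).
Proof.
  intros Hx HW He. rewrite !Rpower_1_plus by lra.
  assert (Hle : Rpower x (1 + e) <= Rpower W (1 + e)) by (apply Rle_Rpower_l; lra).
  rewrite !Rpower_1_plus in Hle by lra.
  assert (HW1 : 1 <= Rpower W (1 + e)) by (apply Rpower_ge_1; lra).
  rewrite Rpower_1_plus in HW1 by lra.
  assert (0 < Rpower x e) by apply Rpower_pos.
  assert (0 <= x * Rpower x e) by (apply Rmult_le_pos; lra).
  destruct (Rle_lt_dec x 1) as [Hx1|Hx1].
  - assert (Rpower x e <= 1).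
    { destruct (Req_dec x 1) as [->|]; [rewrite Rpower_base_1; lra|].
      rewrite <- (Rpower_base_1 e). apply Rle_Rpower_l; lra. }
    assert (x * Rpower x e <= x * 1) by (apply Rmult_le_compat_l; lra).
    apply Rabs_le. split; lra.
  - assert (1 <= Rpower x e) by (apply Rpower_ge_1; lra).
    assert (x * 1 <= x * Rpower x e) by (apply Rmult_le_compat_l; lra).
    apply Rabs_le. split; lra.
Qed.

Lemma continuity_pt_of_is_derive (f : R -> R) (x l : R) : is_derive f x l -> continuity_pt f x.
Proof. intros H. apply derivable_continuous_pt. exists l. apply is_derive_Reals, H. Qed.

Lemma MVT_interior (f df : R -> R) (a b : R) :
  a < b ->
  (forall x, a < x < b -> is_derive f x (df x)) ->
  (forall x, a <= x <= b -> continuity_pt f x) ->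
  exists c, a < c < b /\ f b - f a = df c * (b - a).
Proof.
  intros Hab Hd Hc.
  assert (pr1 : forall c, a < c < b -> derivable_pt f c).
  { intros c Hc'. exists (df c). apply is_derive_Reals, Hd, Hc'. }
  assert (pr2 : forall c, a < c < b -> derivable_pt id c)
    by (intros; apply derivable_pt_id).
  destruct (MVT f id a b pr1 pr2 Hab Hc) as [c [Hc' HP]].
  { intros c _. apply derivable_continuous_pt, derivable_pt_id. }
  exists c. split; [exact Hc'|].
  rewrite (derive_pt_eq_0 f c (df c) (pr1 c Hc')) in HP
    by (apply is_derive_Reals, Hd, Hc').
  rewrite (derive_pt_eq_0 id c 1 (pr2 c Hc')) in HP by apply derivable_pt_lim_id.
  unfold id in HP. lra.
Qed.

Lemma derive_nonneg_le (f df : R -> R) (a b : R) :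
  a <= b ->
  (forall x, a < x < b -> is_derive f x (df x)) ->
  (forall x, a <= x <= b -> continuity_pt f x) ->
  (forall x, a < x < b -> 0 <= df x) -> f a <= f b.
Proof.
  intros Hab Hd Hc Hs. destruct (Req_dec a b) as [->|Hne]; [lra|].
  destruct (MVT_interior f df a b) as [c [Hc1 Hc2]]; [lra|auto|auto|].
  specialize (Hs c Hc1). nra.
Qed.

Lemma derive_nonpos_ge (f df : R -> R) (a b : R) :
  a <= b ->
  (forall x, a < x < b -> is_derive f x (df x)) ->
  (forall x, a <= x <= b -> continuity_pt f x) ->
  (forall x, a < x < b -> df x <= 0) -> f b <= f a.
Proof.
  intros Hab Hd Hc Hs.
  enough (- f a <= - f b) by lra.
  apply (derive_nonneg_le (fun t => - f t) (fun t => - df t)); auto.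
  - intros x Hx. apply (is_derive_opp f x (df x)), Hd, Hx.
  - intros x Hx. apply continuity_pt_opp, Hc, Hx.
  - intros x Hx. specialize (Hs x Hx). lra.
Qed.

Lemma MVT_length_bound (f df : R -> R) (a b S : R) :
  a < b ->
  (forall x, a < x < b -> is_derive f x (df x)) ->
  (forall x, a <= x <= b -> continuity_pt f x) ->
  (forall x, a < x < b -> S <= Rabs (df x)) -> S * (b - a) <= Rabs (f b - f a).
Proof.
  intros Hab Hd Hc HS.
  destruct (MVT_interior f df a b) as [c [Hc1 ->]]; [lra|auto|auto|].
  rewrite Rabs_mult, (Rabs_pos_eq (b - a)) by lra.
  apply Rmult_le_compat_r; [lra|auto].
Qed.

Lemma derive_pos_of_nonvanishing (f df : R -> R) (a b : R) :
  a < b -> f a < f b ->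
  (forall x, a < x < b -> is_derive f x (df x)) ->
  (forall x, a <= x <= b -> continuity_pt f x) ->
  (forall x, a < x < b -> continuity_pt df x) ->
  (forall x, a < x < b -> df x <> 0) ->
  forall x, a < x < b -> 0 < df x.
Proof.
  intros Hab Hfab Hd Hc Hdc Hnz x Hx.
  destruct (Rlt_le_dec 0 (df x)) as [|Hle]; [auto|exfalso].
  assert (Hneg : df x < 0) by (specialize (Hnz x Hx); lra).
  destruct (MVT_interior f df a b) as [c [Hca Hfc]]; [lra|auto|auto|].
  assert (Hpos : 0 < df c) by nra.
  destruct (Rlt_le_dec c x) as [Hcx|Hxc].
  - destruct (Ranalysis5.IVT_interv (fun t => - df t) c x) as [z [Hz Hz0]];
      [intros; apply continuity_pt_opp, Hdc; lra|lra|lra|lra|].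
    apply (Hnz z); lra.
  - assert (x <> c) by (intros ->; lra).
    destruct (Ranalysis5.IVT_interv df x c) as [z [Hz Hz0]];
      [intros; apply Hdc; lra|lra|lra|lra|].
    apply (Hnz z); lra.
Qed.

Lemma is_derive_local_min (f : R -> R) (a b c l : R) :
  a < c < b -> is_derive f c l -> (forall x, a < x < b -> f c <= f x) -> l = 0.
Proof.
  intros Hc Hd Hmin. assert (pr : derivable_pt f c) by (exists l; apply is_derive_Reals, Hd).
  rewrite <- (derive_pt_eq_0 f c l pr) by (apply is_derive_Reals, Hd).
  apply (deriv_minimum f a b c pr); [lra|lra|intros; apply Hmin; lra].
Qed.

Lemma is_derive_local_max (f : R -> R) (a b c l : R) :
  a < c < b -> is_derive f c l -> (forall x, a < x < b -> f x <= f c) -> l = 0.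
Proof.
  intros Hc Hd Hmax. assert (pr : derivable_pt f c) by (exists l; apply is_derive_Reals, Hd).
  rewrite <- (derive_pt_eq_0 f c l pr) by (apply is_derive_Reals, Hd).
  apply (deriv_maximum f a b c pr); [lra|lra|intros; apply Hmax; lra].
Qed.

Lemma sign_change_at_zero (g : R -> R) (x D : R) :
  is_derive g x D -> g x = 0 -> D < 0 ->
  exists d, 0 < d /\ forall h, 0 < h < d -> g (x + h) < 0 /\ 0 < g (x - h).
Proof.
  intros Hd H0 HD. apply is_derive_Reals in Hd.
  destruct (Hd (- D / 2)) as [d Hdd]; [lra|].
  exists d. split; [apply cond_pos|]. intros h Hh.
  assert (Hright := Hdd h ltac:(lra) ltac:(rewrite Rabs_pos_eq; lra)).
  assert (Hleft := Hdd (- h) ltac:(lra) ltac:(rewrite Rabs_Ropp, Rabs_pos_eq; lra)).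
  rewrite H0, Rminus_0_r in Hright, Hleft. apply Rabs_def2 in Hright, Hleft.
  replace (x + - h) with (x - h) in Hleft by ring.
  assert (E1 : g (x + h) = g (x + h) / h * h) by (field; lra).
  assert (E2 : g (x - h) = - (g (x - h) / - h) * h) by (field; lra).
  split; [rewrite E1 | rewrite E2]; nra.
Qed.

Lemma is_derive_mul_exp (f df : R -> R) (k x : R) :
  is_derive f x (df x) ->
  is_derive (fun t => f t * exp (k * t)) x ((df x + k * f x) * exp (k * x)).
Proof.
  intros Hd. auto_derive.
  - exists (df x). exact Hd.
  - change (Derive (fun t => f t) x) with (Derive f x).
    rewrite (is_derive_unique f x (df x) Hd). ring.
Qed.

Lemma gronwall_le (f df : R -> R) (k a b : R) :
  a <= b ->
  (forall x, a < x < b -> is_derive f x (df x)) ->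
  (forall x, a <= x <= b -> continuity_pt f x) ->
  (forall x, a < x < b -> df x <= k * f x) -> f b <= f a * exp (k * (b - a)).
Proof.
  intros Hab Hd Hc Hk.
  assert (H : f b * exp (- k * b) <= f a * exp (- k * a)).
  { apply (derive_nonpos_ge (fun t => f t * exp (- k * t))
      (fun t => (df t + - k * f t) * exp (- k * t))); auto.
    - intros x Hx. apply is_derive_mul_exp, Hd, Hx.
    - intros x Hx. apply continuity_pt_mult; [apply Hc, Hx|].
      apply derivable_continuous_pt. exists (- k * exp (- k * x)).
      apply is_derive_Reals. auto_derive; [easy|ring].
    - intros x Hx. specialize (Hk x Hx). assert (0 < exp (- k * x)) by apply exp_pos. nra. }
  replace (exp (k * (b - a))) with (exp (- k * a) * exp (k * b))
    by (rewrite <- exp_plus; f_equal; ring).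
  replace (f b) with (f b * exp (- k * b) * exp (k * b))
    by (rewrite Rmult_assoc, <- exp_plus; replace (- k * b + k * b) with 0 by ring;
        rewrite exp_0; ring).
  assert (0 < exp (k * b)) by apply exp_pos. nra.
Qed.

Lemma gronwall_ge (f df : R -> R) (k a b : R) :
  a <= b ->
  (forall x, a < x < b -> is_derive f x (df x)) ->
  (forall x, a <= x <= b -> continuity_pt f x) ->
  (forall x, a < x < b -> k * f x <= df x) -> f a * exp (k * (b - a)) <= f b.
Proof.
  intros Hab Hd Hc Hk.
  enough (- f b <= - f a * exp (k * (b - a))) by lra.
  apply (gronwall_le (fun t => - f t) (fun t => - df t)); auto.
  - intros x Hx. apply (is_derive_opp f x (df x)), Hd, Hx.
  - intros x Hx. apply continuity_pt_opp, Hc, Hx.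
  - intros x Hx. specialize (Hk x Hx). lra.
Qed.

Lemma RInt_exp_affine (k c a b : R) : k <> 0 ->
  RInt (fun r => exp (k * (r - c))) a b = (exp (k * (b - c)) - exp (k * (a - c))) / k.
Proof.
  intros Hk.
  assert (H : is_RInt (fun r => exp (k * (r - c))) a b
                (minus (exp (k * (b - c)) / k) (exp (k * (a - c)) / k))).
  { apply (is_RInt_derive (fun r => exp (k * (r - c)) / k)).
    - intros x _. auto_derive; [easy|unfold Rminus; field; exact Hk].
    - intros x _. apply continuity_pt_filterlim, derivable_continuous_pt.
      exists (k * exp (k * (x - c))). apply is_derive_Reals.
      auto_derive; [easy|unfold Rminus; ring]. }
  rewrite (is_RInt_unique _ _ _ _ H). unfold minus, plus, opp; simpl. field. exact Hk.
Qed.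

Lemma RInt_le_exp_bound (f : R -> R) (M k c a b : R) :
  a <= b -> k <> 0 -> ex_RInt f a b ->
  (forall x, a < x < b -> f x <= M * exp (k * (x - c))) ->
  RInt f a b <= M * ((exp (k * (b - c)) - exp (k * (a - c))) / k).
Proof.
  intros Hab Hk Hex Hf.
  assert (Hexp : ex_RInt (fun r => exp (k * (r - c))) a b).
  { apply (ex_RInt_continuous (V := R_CompleteNormedModule)). intros x _.
    apply continuity_pt_filterlim, derivable_continuous_pt.
    exists (k * exp (k * (x - c))). apply is_derive_Reals.
    auto_derive; [easy|unfold Rminus; ring]. }
  rewrite <- RInt_exp_affine by exact Hk.
  rewrite <- (RInt_scal (V := R_CompleteNormedModule)) by exact Hexp.
  apply RInt_le; auto.
  apply (ex_RInt_scal (V := R_NormedModule)), Hexp.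
Qed.

Lemma is_lim_Rpower_pinfty (e : R) : 0 < e -> is_lim (fun y => Rpower y e) p_infty p_infty.
Proof.
  intros He. apply (is_lim_comp exp (fun y => e * ln y) p_infty p_infty p_infty).
  - apply is_lim_exp_p.
  - replace p_infty with (Rbar_mult e p_infty) at 2.
    + apply is_lim_scal_l, is_lim_ln_p.
    + apply is_Rbar_mult_unique, is_Rbar_mult_sym, is_Rbar_mult_p_infty_pos. exact He.
  - exists 0. intros y _. discriminate.
Qed.

Lemma is_lim_Rpower_0 (e : R) : e < 0 -> is_lim (fun y => Rpower y e) p_infty 0.
Proof.
  intros He. apply (is_lim_comp exp (fun y => e * ln y) p_infty 0 m_infty).
  - apply is_lim_exp_m.
  - replace m_infty with (Rbar_mult e p_infty).
    + apply is_lim_scal_l, is_lim_ln_p.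
    + apply is_Rbar_mult_unique, is_Rbar_mult_sym, is_Rbar_mult_p_infty_neg. exact He.
  - exists 0. intros y _. discriminate.
Qed.

Lemma is_lim_pinfty_of_ge_power (f : R -> R) (c e K : R) :
  0 < c -> 0 < e -> (forall L, K < L -> c * Rpower L e <= f L) ->
  is_lim f p_infty p_infty.
Proof.
  intros Hc He Hf. apply (is_lim_le_p_loc (fun L => c * Rpower L e)).
  - exists K. exact Hf.
  - replace p_infty with (Rbar_mult c p_infty) at 2.
    + apply is_lim_scal_l, is_lim_Rpower_pinfty, He.
    + apply is_Rbar_mult_unique, is_Rbar_mult_sym, is_Rbar_mult_p_infty_pos. exact Hc.
Qed.

Lemma is_lim_0_of_le_power (f : R -> R) (C e K : R) :
  e < 0 -> (forall L, K < L -> 0 <= f L <= C * Rpower L e) ->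
  is_lim f p_infty 0.
Proof.
  intros He Hf. apply (is_lim_le_le_loc (fun _ => 0) (fun L => C * Rpower L e)).
  - exists K. exact Hf.
  - apply is_lim_const.
  - replace (Finite 0) with (Rbar_mult C 0) by (simpl; f_equal; ring).
    apply is_lim_scal_l, is_lim_Rpower_0, He.
Qed.

Lemma liminf_pinfty_of_bounded (f : R -> R) (c C K : R) :
  0 < c -> (forall L, K < L -> c <= f L <= C) ->
  exists l, 0 < l /\ liminf_pinfty_is f l.
Proof.
  intros Hc Hf.
  set (S := fun y => exists M, forall L, M < L -> y <= f L).
  assert (Hbd : bound S).
  { exists C. intros y [M HM]. set (L := Rmax M K + 1).
    specialize (HM L ltac:(unfold L; generalize (Rmax_l M K); lra)).
    specialize (Hf L ltac:(unfold L; generalize (Rmax_r M K); lra)). lra. }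
  assert (HcS : S c) by (exists K; intros L HL; apply Hf, HL).
  destruct (completeness S Hbd (ex_intro _ c HcS)) as [l [Hub Hlub]].
  assert (Hcl : c <= l) by (apply Hub, HcS).
  exists l. split; [lra|]. split.
  - intros eps He. apply NNPP. intros Hno.
    enough (l <= l - eps) by lra.
    apply Hlub. intros y [M HM]. apply Rnot_lt_le. intros Hy. apply Hno.
    exists M. intros L HL. specialize (HM L HL). lra.
  - intros eps He M. apply NNPP. intros Hno.
    enough (l + eps <= l) by lra.
    apply Hub. exists M. intros L HL. apply Rnot_lt_le. intros Hlt. apply Hno.
    exists L. split; assumption.
Qed.

(** * The rescaled radial problem *)

Section RescaledProblem.

Variables (N : nat) (p L : R) (w w' w'' : R -> R).
Hypothesis HN : (2 <= N)%nat.
Hypothesis Hp : 2 < p.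
Hypothesis HL : 0 < L.
Hypothesis w_cont : forall r, continuity_pt w r.
Hypothesis w_1 : w 1 = 0.
Hypothesis w_2 : w 2 = 0.
Hypothesis w_pos : forall r, 1 < r < 2 -> 0 < w r.
Hypothesis w_der : forall r, 1 < r < 2 -> is_derive w r (w' r).
Hypothesis w'_der : forall r, 1 < r < 2 -> is_derive w' r (w'' r).
Hypothesis w_ode : forall r, 1 < r < 2 ->
  w'' r = L * (w r - Rpower (w r) (p - 1)) - (INR N - 1) / r * w' r.

Lemma INR_N_pred_ge_1 : 1 <= INR N - 1.
Proof. apply le_INR in HN. simpl in HN. lra. Qed.

Lemma pow_2_N : 2 ^ N = 2 * 2 ^ (N - 1).
Proof. destruct N as [|n]; [lia|]. simpl. rewrite Nat.sub_0_r. reflexivity. Qed.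

Lemma w_nonneg r : 1 <= r <= 2 -> 0 <= w r.
Proof.
  intros Hr. destruct (Req_dec r 1) as [->|H1]; [lra|].
  destruct (Req_dec r 2) as [->|H2]; [lra|]. apply Rlt_le, w_pos. lra.
Qed.

Lemma w'_cont r : 1 < r < 2 -> continuity_pt w' r.
Proof. intros Hr. apply (continuity_pt_of_is_derive _ _ (w'' r)), w'_der, Hr. Qed.

Lemma Rpower_w_pred r : 1 < r < 2 -> Rpower (w r) (p - 1) = w r * Rpower (w r) (p - 2).
Proof.
  intros Hr. replace (p - 1) with (1 + (p - 2)) by ring. apply Rpower_1_plus, w_pos, Hr.
Qed.

Definition potential (x : R) : R := Rpower x p / p - x ^ 2 / 2.

Definition energy (r : R) : R := w' r ^ 2 / 2 + L * potential (w r).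

Lemma potential_eq x : 0 < x -> potential x = x ^ 2 * (Rpower x (p - 2) / p - 1 / 2).
Proof.
  intros Hx. unfold potential. replace p with (2 + (p - 2)) at 1 by ring.
  rewrite Rpower_2_plus by exact Hx. field. lra.
Qed.

Lemma is_derive_energy r : 1 < r < 2 ->
  is_derive energy r (- ((INR N - 1) / r) * w' r ^ 2).
Proof.
  intros Hr. assert (Hw := w_pos r Hr). unfold energy, potential. auto_derive.
  - repeat split.
    + exists (w'' r). apply w'_der, Hr.
    + apply (ex_derive_Rpower (w r) p Hw).
    + exists (w' r). apply w_der, Hr.
    + exists (w' r). apply w_der, Hr.
  - change (Derive (fun x => w' x) r) with (Derive w' r).
    change (Derive (fun x => w x) r) with (Derive w r).
    rewrite (is_derive_unique _ _ _ (w'_der r Hr)), (is_derive_unique _ _ _ (w_der r Hr)).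
    rewrite (Derive_Rpower (w r) p Hw), (w_ode r Hr).
    replace (p - 1) with (1 + (p - 2)) by ring. rewrite (Rpower_1_plus (w r) (p - 2) Hw).
    field. split; lra.
Qed.

Lemma energy_nonincreasing x y : 1 < x -> x <= y -> y < 2 -> energy y <= energy x.
Proof.
  intros Hx Hxy Hy.
  apply (derive_nonpos_ge energy (fun r => - ((INR N - 1) / r) * w' r ^ 2)); auto.
  - intros r Hr. apply is_derive_energy. lra.
  - intros r Hr. eapply continuity_pt_of_is_derive, is_derive_energy. lra.
  - intros r Hr. generalize INR_N_pred_ge_1 (pow2_ge_0 (w' r)). intros.
    assert (0 <= (INR N - 1) / r) by (apply Rdiv_le_0_compat; lra). nra.
Qed.

(* Near r = 2 the energy is at least -L w^2/2, which tends to 0. *)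
Lemma energy_nonneg r : 1 < r < 2 -> 0 <= energy r.
Proof.
  intros Hr. destruct (Rle_lt_dec 0 (energy r)) as [|Hneg]; [assumption|exfalso].
  set (eps := sqrt (- energy r / L)).
  assert (Heps : 0 < eps) by (apply sqrt_lt_R0, Rdiv_lt_0_compat; lra).
  assert (Heps2 : eps ^ 2 = - energy r / L)
    by (unfold eps; simpl; rewrite Rmult_1_r; apply sqrt_sqrt, Rlt_le, Rdiv_lt_0_compat; lra).
  destruct (w_cont 2 eps Heps) as [d [Hd Hnear]].
  set (y := Rmax r (2 - d / 2)).
  assert (Hy : r <= y < 2) by (split; [apply Rmax_l|unfold y; apply Rmax_lub_lt; lra]).
  assert (Hwy : w y < eps).
  { assert (Hdy : Rabs (y - 2) < d).
    { rewrite Rabs_left by lra. generalize (Rmax_r r (2 - d / 2)). fold y. lra. }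
    specialize (Hnear y). simpl in Hnear. unfold R_dist, D_x, no_cond in Hnear.
    rewrite w_2, Rminus_0_r in Hnear.
    assert (Hy2 : 2 <> y) by lra.
    generalize (Rle_abs (w y)) (Hnear (conj (conj I Hy2) Hdy)). lra. }
  assert (Hwy0 : 0 < w y) by (apply w_pos; lra).
  assert (Hdec : energy y <= energy r) by (apply energy_nonincreasing; lra).
  assert (HLw : L * w y ^ 2 < - energy r).
  { replace (- energy r) with (L * eps ^ 2) by (rewrite Heps2; field; lra).
    apply Rmult_lt_compat_l; [lra|]. nra. }
  assert (0 < Rpower (w y) p / p) by (apply Rdiv_lt_0_compat; [apply Rpower_pos|lra]).
  generalize (pow2_ge_0 (w' y)). unfold energy, potential in *. nra.
Qed.

Lemma critical_value_ge t : 1 < t < 2 -> w' t = 0 -> p / 2 <= Rpower (w t) (p - 2).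
Proof.
  intros Ht H0. assert (Hw := w_pos t Ht).
  generalize (energy_nonneg t Ht). unfold energy. rewrite H0, potential_eq by exact Hw.
  set (q := Rpower (w t) (p - 2) / p - 1 / 2). intros HE.
  assert (Hq : 0 <= q).
  { destruct (Rle_lt_dec 0 q) as [|Hlt]; [assumption|].
    assert (w t ^ 2 * q < 0) by (apply Rmult_pos_neg; [apply pow_lt, Hw|exact Hlt]).
    assert (L * (w t ^ 2 * q) < 0) by (apply Rmult_pos_neg; assumption). simpl in HE. lra. }
  unfold q in Hq. apply (Rmult_le_compat_r p) in Hq; [|lra].
  replace ((Rpower (w t) (p - 2) / p - 1 / 2) * p) with (Rpower (w t) (p - 2) - p / 2)
    in Hq by (field; lra). lra.
Qed.

Lemma critical_point_concave t : 1 < t < 2 -> w' t = 0 -> w'' t < 0.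
Proof.
  intros Ht H0. assert (Hw := w_pos t Ht).
  assert (Hbig := critical_value_ge t Ht H0).
  rewrite w_ode, H0, Rpower_w_pred by exact Ht.
  assert (w t * (1 - Rpower (w t) (p - 2)) < 0) by (apply Rmult_pos_neg; lra).
  replace (L * (w t - w t * Rpower (w t) (p - 2)) - (INR N - 1) / t * 0)
    with (L * (w t * (1 - Rpower (w t) (p - 2)))) by ring.
  nra.
Qed.

Lemma critical_point_strict_max t : 1 < t < 2 -> w' t = 0 ->
  exists d, 0 < d /\ forall h, 0 < h < d ->
    1 < t - h /\ t + h < 2 /\ w (t + h) < w t /\ w (t - h) < w t.
Proof.
  intros Ht H0.
  destruct (sign_change_at_zero w' t (w'' t)) as [d1 [Hd1 Hsign]];
    [apply w'_der, Ht|exact H0|apply critical_point_concave; assumption|].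
  set (d := Rmin d1 (Rmin (t - 1) (2 - t))).
  assert (Hd : 0 < d /\ d <= d1 /\ d <= t - 1 /\ d <= 2 - t).
  { unfold d. generalize (Rmin_l d1 (Rmin (t - 1) (2 - t))) (Rmin_r d1 (Rmin (t - 1) (2 - t)))
      (Rmin_l (t - 1) (2 - t)) (Rmin_r (t - 1) (2 - t)).
    repeat split; try lra. repeat apply Rmin_pos; lra. }
  exists d. split; [lra|]. intros h Hh. do 2 (split; [lra|]). split.
  - destruct (MVT_interior w w' t (t + h)) as [c [Hc Hmvt]];
      [lra|intros; apply w_der; lra|intros; apply w_cont|].
    assert (w' c < 0) by (replace c with (t + (c - t)) by ring; apply Hsign; lra). nra.
  - destruct (MVT_interior w w' (t - h) t) as [c [Hc Hmvt]];
      [lra|intros; apply w_der; lra|intros; apply w_cont|].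
    assert (0 < w' c) by (replace c with (t - (t - c)) by ring; apply Hsign; lra). nra.
Qed.

(* Between two strict local maxima there would be an interior minimum, hence a
   critical point that is not a strict local maximum. *)
Lemma no_two_critical_points s t : 1 < s -> s < t -> t < 2 -> w' s = 0 -> w' t = 0 -> False.
Proof.
  intros Hs Hst Ht Hs0 Ht0.
  destruct (continuity_ab_min w s t) as [q [Hmin Hq]]; [lra|intros; apply w_cont|].
  destruct (critical_point_strict_max s) as [ds [Hds Hsmax]]; [lra|exact Hs0|].
  destruct (critical_point_strict_max t) as [dt [Hdt Htmax]]; [lra|exact Ht0|].
  set (hs := Rmin (ds / 2) (t - s)).
  assert (Hhs : 0 < hs < ds /\ hs <= t - s) by (unfold hs; generalize (Rmin_l (ds / 2) (t - s))
    (Rmin_r (ds / 2) (t - s)); repeat split; try lra; apply Rmin_pos; lra).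
  set (ht := Rmin (dt / 2) (t - s)).
  assert (Hht : 0 < ht < dt /\ ht <= t - s) by (unfold ht; generalize (Rmin_l (dt / 2) (t - s))
    (Rmin_r (dt / 2) (t - s)); repeat split; try lra; apply Rmin_pos; lra).
  assert (Hqs : q <> s).
  { intros ->. destruct (Hsmax hs (proj1 Hhs)) as [_ [_ [Hlt _]]].
    specialize (Hmin (s + hs) ltac:(lra)). lra. }
  assert (Hqt : q <> t).
  { intros ->. destruct (Htmax ht (proj1 Hht)) as [_ [_ [_ Hlt]]].
    specialize (Hmin (t - ht) ltac:(lra)). lra. }
  assert (Hq0 : w' q = 0)
    by (apply (is_derive_local_min w s t q); [lra|apply w_der; lra|intros; apply Hmin; lra]).
  destruct (critical_point_strict_max q) as [dq [Hdq Hqmax]]; [lra|exact Hq0|].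
  set (hq := Rmin (dq / 2) (t - q)).
  assert (Hhq : 0 < hq < dq /\ hq <= t - q) by (unfold hq; generalize (Rmin_l (dq / 2) (t - q))
    (Rmin_r (dq / 2) (t - q)); repeat split; try lra; apply Rmin_pos; lra).
  destruct (Hqmax hq (proj1 Hhq)) as [_ [_ [Hlt _]]].
  specialize (Hmin (q + hq) ltac:(lra)). lra.
Qed.

Lemma exists_interior_max : exists r0, 1 < r0 < 2 /\ forall x, 1 <= x <= 2 -> w x <= w r0.
Proof.
  destruct (continuity_ab_maj w 1 2) as [M [HM1 HM2]]; [lra|intros; apply w_cont|].
  assert (0 < w (3 / 2)) by (apply w_pos; lra).
  assert (w (3 / 2) <= w M) by (apply HM1; lra).
  exists M. split; [|assumption].
  destruct (Req_dec M 1) as [->|]; [lra|]. destruct (Req_dec M 2) as [->|]; lra.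
Qed.

Definition kappa : R := Rpower (p / 2) (/ (p - 2)).

Definition potential_depth : R := kappa ^ 2 / 2.

Definition beta : R := exp (2 * (INR N - 1)).

Definition shifted_energy (r : R) : R := energy r + L * potential_depth.

Lemma potential_depth_nonneg : 0 <= potential_depth.
Proof. unfold potential_depth. generalize (pow2_ge_0 kappa). lra. Qed.

Lemma beta_ge_1 : 1 <= beta.
Proof.
  unfold beta. generalize (exp_ineq1_le (2 * (INR N - 1))) INR_N_pred_ge_1. lra.
Qed.

(* kappa is where the potential changes sign; below it, -potential <= x^2/2. *)
Lemma neg_potential_le x : 0 < x -> - potential x <= potential_depth.
Proof.
  intros Hx. assert (Hkappa : Rpower kappa (p - 2) = p / 2) by (apply Rpower_Rinv_r; lra).
  destruct (Rle_lt_dec x kappa) as [Hle|Hlt].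
  - assert (0 < Rpower x p / p) by (apply Rdiv_lt_0_compat; [apply Rpower_pos|lra]).
    assert (x ^ 2 <= kappa ^ 2) by (apply pow_incr; lra).
    unfold potential, potential_depth. lra.
  - rewrite potential_eq by exact Hx.
    assert (p / 2 < Rpower x (p - 2))
      by (rewrite <- Hkappa; apply Rlt_Rpower_l; [lra|split; [apply Rpower_pos|exact Hlt]]).
    assert (0 <= Rpower x (p - 2) / p - 1 / 2).
    { replace (Rpower x (p - 2) / p - 1 / 2) with ((Rpower x (p - 2) - p / 2) / p)
        by (field; lra).
      apply Rdiv_le_0_compat; lra. }
    generalize (pow2_ge_0 x) potential_depth_nonneg. nra.
Qed.

Lemma shifted_energy_nonneg r : 1 < r < 2 -> 0 <= shifted_energy r.
Proof.
  intros Hr. unfold shifted_energy. generalize (energy_nonneg r Hr) potential_depth_nonneg. nra.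
Qed.

Lemma derive_sq_le_shifted_energy r : 1 < r < 2 -> w' r ^ 2 <= 2 * shifted_energy r.
Proof.
  intros Hr. generalize (neg_potential_le (w r) (w_pos r Hr)).
  unfold shifted_energy, energy. nra.
Qed.

(* The damping term costs at most the factor beta over the unit interval:
   shifted_energy r * exp (2 (N - 1) r) is nondecreasing. *)
Lemma shifted_energy_growth r s : 1 < r -> r <= s -> s < 2 ->
  shifted_energy r <= beta * shifted_energy s.
Proof.
  intros Hr Hrs Hs. set (A := INR N - 1). assert (HA := INR_N_pred_ge_1). fold A in HA.
  assert (Hder : forall x, 1 < x < 2 -> is_derive shifted_energy x (- (A / x) * w' x ^ 2)).
  { intros x Hx. unfold shifted_energy.
    apply (is_derive_ext (fun t => energy t + L * potential_depth)); [reflexivity|].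
    replace (- (A / x) * w' x ^ 2) with (- (A / x) * w' x ^ 2 + 0) by ring.
    apply (is_derive_plus energy (fun _ => L * potential_depth)).
    - apply is_derive_energy, Hx.
    - apply (is_derive_const (L * potential_depth) x). }
  assert (Hmono : shifted_energy r * exp (2 * A * r) <= shifted_energy s * exp (2 * A * s)).
  { apply (derive_nonneg_le (fun t => shifted_energy t * exp (2 * A * t))
      (fun t => (- (A / t) * w' t ^ 2 + 2 * A * shifted_energy t) * exp (2 * A * t))); auto.
    - intros x Hx. apply (is_derive_mul_exp _ (fun t => - (A / t) * w' t ^ 2)), Hder. lra.
    - intros x Hx. eapply continuity_pt_of_is_derive.
      apply (is_derive_mul_exp _ (fun t => - (A / t) * w' t ^ 2)), Hder. lra.
    - intros x Hx. assert (Hx' : 1 < x < 2) by lra.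
      assert (Hw' := derive_sq_le_shifted_energy x Hx').
      assert (A / x <= A) by (apply Rmult_le_reg_r with x; [lra|]; field_simplify; nra).
      assert (0 <= A / x) by (apply Rdiv_le_0_compat; lra).
      assert (A / x * w' x ^ 2 <= 2 * A * shifted_energy x) by (generalize (pow2_ge_0 (w' x)); nra).
      generalize (exp_pos (2 * A * x)). nra. }
  assert (Hexp : exp (2 * A * s) = exp (2 * A * (s - r)) * exp (2 * A * r))
    by (rewrite <- exp_plus; f_equal; ring).
  assert (Hbeta : exp (2 * A * (s - r)) <= beta).
  { unfold beta. fold A. destruct (Req_dec (2 * A * (s - r)) (2 * A)) as [->|]; [lra|].
    apply Rlt_le, exp_increasing. nra. }
  rewrite Hexp in Hmono. generalize (exp_pos (2 * A * r)) (shifted_energy_nonneg s ltac:(lra)).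
  intros. assert (shifted_energy r <= exp (2 * A * (s - r)) * shifted_energy s)
    by (apply Rmult_le_reg_r with (exp (2 * A * r)); [assumption|nra]).
  nra.
Qed.

Definition flux (r : R) : R := r ^ (N - 1) * w' r.

Lemma is_derive_flux r : 1 < r < 2 ->
  is_derive flux r (r ^ (N - 1) * (L * (w r - Rpower (w r) (p - 1)))).
Proof.
  intros Hr. unfold flux. auto_derive.
  - exists (w'' r). apply w'_der, Hr.
  - change (Derive (fun x => w' x) r) with (Derive w' r).
    rewrite (is_derive_unique _ _ _ (w'_der r Hr)), (w_ode r Hr).
    destruct N as [|[|n]]; [lia|lia|].
    replace (S (S n) - 1)%nat with (S n) by lia. simpl pred.
    rewrite !S_INR. simpl. field. lra.
Qed.

(* Where w >= th > 1 the flux decreases at rate at least L (th^(p-1) - th). *)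
Lemma plateau_length_le th a b : 1 < th -> 1 < a -> a < b -> b < 2 ->
  (forall x, a <= x <= b -> th <= w x) ->
  (b - a) * (L * (Rpower th (p - 1) - th)) <= 2 ^ (N - 1) * (Rabs (w' a) + Rabs (w' b)).
Proof.
  intros Hth Ha Hab Hb Hw.
  destruct (MVT_interior flux (fun r => r ^ (N - 1) * (L * (w r - Rpower (w r) (p - 1)))) a b)
    as [c [Hc Hmvt]]; [exact Hab| | |].
  - intros x Hx. apply is_derive_flux. lra.
  - intros x Hx. eapply continuity_pt_of_is_derive, is_derive_flux. lra.
  - assert (Hdec : w c - Rpower (w c) (p - 1) <= th - Rpower th (p - 1)).
    { replace (p - 1) with (1 + (p - 2)) by ring.
      apply sub_Rpower_antitone; [lra|]. generalize (Hw c ltac:(lra)). lra. }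
    assert (Hneg : th - Rpower th (p - 1) <= 0).
    { replace (p - 1) with (1 + (p - 2)) by ring. rewrite Rpower_1_plus by lra.
      generalize (Rpower_ge_1 th (p - 2) ltac:(lra) ltac:(lra)). nra. }
    assert (Hc1 : 1 <= c ^ (N - 1)) by (apply pow_R1_Rle; lra).
    assert (Hflux : forall r, 1 <= r <= 2 -> Rabs (flux r) <= 2 ^ (N - 1) * Rabs (w' r)).
    { intros r Hr. unfold flux. rewrite Rabs_mult, Rabs_pos_eq by (apply pow_le; lra).
      apply Rmult_le_compat_r; [apply Rabs_pos|apply pow_incr; lra]. }
    set (D := L * (th - Rpower th (p - 1))).
    assert (HE : L * (w c - Rpower (w c) (p - 1)) <= D) by (apply Rmult_le_compat_l; lra).
    assert (HD : D <= 0) by (unfold D; nra).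
    assert (Hg : c ^ (N - 1) * (L * (w c - Rpower (w c) (p - 1))) <= D) by nra.
    assert (Hfl : flux a - flux b >= - D * (b - a)) by nra.
    generalize (Hflux a ltac:(lra)) (Hflux b ltac:(lra))
      (Rle_abs (flux a)) (Rle_abs (- flux b)). rewrite Rabs_Ropp. unfold D in *. lra.
Qed.

Lemma plateau_length_le_of_slope th a b D : 1 < th -> 1 < a -> a < b -> b < 2 ->
  (forall x, a <= x <= b -> th <= w x) -> Rabs (w' a) <= D -> Rabs (w' b) <= D ->
  (b - a) * (L * (Rpower th (p - 1) - th)) <= 2 ^ N * D.
Proof.
  intros Hth Ha Hab Hb Hw Hda Hdb.
  eapply Rle_trans; [apply plateau_length_le; assumption|].
  rewrite pow_2_N.
  generalize (pow_lt 2 (N - 1) ltac:(lra)). nra.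
Qed.

Definition mass_density (r : R) : R := w r ^ 2 * r ^ (N - 1).

Lemma ex_RInt_mass_density a b : ex_RInt mass_density a b.
Proof.
  apply (ex_RInt_continuous (V := R_CompleteNormedModule)). intros z _.
  apply continuity_pt_filterlim. unfold mass_density.
  apply continuity_pt_mult; [|apply derivable_continuous_pt, derivable_pt_pow].
  apply (continuity_pt_comp w (fun y => y ^ 2)); [apply w_cont|].
  apply derivable_continuous_pt, derivable_pt_pow.
Qed.

Lemma RInt_mass_density_nonneg a b : 1 <= a <= b -> b <= 2 -> 0 <= RInt mass_density a b.
Proof.
  intros Hab Hb. apply RInt_ge_0; [lra|apply ex_RInt_mass_density|].
  intros x Hx. unfold mass_density. apply Rmult_le_pos; [apply pow2_ge_0|apply pow_le; lra].
Qed.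

Lemma RInt_mass_density_split a b :
  RInt mass_density 1 2 = RInt mass_density 1 a + RInt mass_density a b + RInt mass_density b 2.
Proof.
  rewrite <- (RInt_Chasles mass_density 1 b 2), <- (RInt_Chasles mass_density 1 a b)
    by apply ex_RInt_mass_density.
  reflexivity.
Qed.

Lemma mass_density_le x m : 1 <= x <= 2 -> w x <= m -> mass_density x <= 2 ^ (N - 1) * m ^ 2.
Proof.
  intros Hx Hm. unfold mass_density. rewrite Rmult_comm.
  apply Rmult_le_compat; [apply pow_le; lra|apply pow2_ge_0|apply pow_incr; lra|].
  apply pow_incr. generalize (w_nonneg x Hx). lra.
Qed.

Lemma RInt_mass_density_le_sup a b m : 1 <= a -> a <= b -> b <= 2 ->
  (forall x, a <= x <= b -> w x <= m) -> RInt mass_density a b <= 2 ^ (N - 1) * m ^ 2 * (b - a).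
Proof.
  intros Ha Hab Hb Hm.
  apply Rle_trans with (RInt (fun _ => 2 ^ (N - 1) * m ^ 2) a b).
  - apply RInt_le; [lra|apply ex_RInt_mass_density|apply ex_RInt_const|].
    intros x Hx. apply mass_density_le; [lra|apply Hm; lra].
  - rewrite RInt_const. unfold scal; simpl; unfold mult; simpl. lra.
Qed.

Lemma RInt_mass_density_ge_inf a b m : 1 <= a -> a <= b -> b <= 2 -> 0 <= m ->
  (forall x, a < x < b -> m <= w x) -> m ^ 2 * (b - a) <= RInt mass_density a b.
Proof.
  intros Ha Hab Hb Hm0 Hm.
  apply Rle_trans with (RInt (fun _ => m ^ 2) a b).
  - rewrite RInt_const. unfold scal; simpl; unfold mult; simpl. lra.
  - apply RInt_le; [lra|apply ex_RInt_const|apply ex_RInt_mass_density|].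
    intros x Hx. unfold mass_density.
    assert (m ^ 2 <= w x ^ 2) by (apply pow_incr; generalize (Hm x Hx); lra).
    assert (1 <= x ^ (N - 1)) by (apply pow_R1_Rle; lra).
    generalize (pow2_ge_0 m). nra.
Qed.

Lemma RInt_mass_density_le_exp a b m k c : 1 <= a -> a <= b -> b <= 2 -> k <> 0 ->
  (forall x, a < x < b -> w x <= m * exp (k * (x - c))) ->
  RInt mass_density a b
    <= 2 ^ (N - 1) * m ^ 2 * ((exp (2 * k * (b - c)) - exp (2 * k * (a - c))) / (2 * k)).
Proof.
  intros Ha Hab Hb Hk Hm. apply RInt_le_exp_bound; [lra|lra|apply ex_RInt_mass_density|].
  intros x Hx. replace (2 ^ (N - 1) * m ^ 2 * exp (2 * k * (x - c)))
    with (2 ^ (N - 1) * (m * exp (k * (x - c))) ^ 2)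
    by (rewrite Rpow_mult_distr, <- Rmult_assoc; f_equal; simpl;
        rewrite Rmult_1_r, <- exp_plus; f_equal; ring).
  apply mass_density_le; [lra|apply Hm, Hx].
Qed.

Lemma RInt_mass_density_left_tail a s : 1 < a < 2 -> 0 < s ->
  (forall x, 1 < x < a -> s * w x <= w' x) ->
  RInt mass_density 1 a <= 2 ^ (N - 1) * w a ^ 2 / (2 * s).
Proof.
  intros Ha Hs Hslope.
  assert (Hdecay : forall x, 1 < x < a -> w x <= w a * exp (s * (x - a))).
  { intros x Hx.
    assert (Hg : w x * exp (s * (a - x)) <= w a).
    { apply (gronwall_ge w w'); [lra| | |].
      - intros y Hy. apply w_der. lra.
      - intros y _. apply w_cont.
      - intros y Hy. apply Hslope. lra. }
    replace (w x) with (w x * exp (s * (a - x)) * exp (s * (x - a)))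
      by (rewrite Rmult_assoc, <- exp_plus; replace (s * (a - x) + s * (x - a)) with 0 by ring;
          rewrite exp_0; ring).
    apply Rmult_le_compat_r; [apply Rlt_le, exp_pos|exact Hg]. }
  eapply Rle_trans; [apply (RInt_mass_density_le_exp 1 a (w a) s a); (lra || exact Hdecay)|].
  rewrite Rminus_diag, Rmult_0_r, exp_0.
  set (M := 2 ^ (N - 1) * w a ^ 2). set (E := exp (2 * s * (1 - a))).
  assert (0 <= M * E / (2 * s)).
  { apply Rdiv_le_0_compat; [|lra]. apply Rmult_le_pos; [|apply Rlt_le, exp_pos].
    apply Rmult_le_pos; [apply pow_le; lra|apply pow2_ge_0]. }
  replace (M * ((1 - E) / (2 * s))) with (M / (2 * s) - M * E / (2 * s)) by (field; lra).
  lra.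
Qed.

Lemma RInt_mass_density_right_tail b s : 1 < b < 2 -> 0 < s ->
  (forall x, b < x < 2 -> w' x <= - s * w x) ->
  RInt mass_density b 2 <= 2 ^ (N - 1) * w b ^ 2 / (2 * s).
Proof.
  intros Hb Hs Hslope.
  assert (Hdecay : forall x, b < x < 2 -> w x <= w b * exp (- s * (x - b))).
  { intros x Hx. apply (gronwall_le w w'); [lra| | |].
    - intros y Hy. apply w_der. lra.
    - intros y _. apply w_cont.
    - intros y Hy. apply Hslope. lra. }
  eapply Rle_trans; [apply (RInt_mass_density_le_exp b 2 (w b) (- s) b); (lra || exact Hdecay)|].
  rewrite Rminus_diag, Rmult_0_r, exp_0.
  set (M := 2 ^ (N - 1) * w b ^ 2). set (E := exp (2 * - s * (2 - b))).
  assert (0 <= M * E / (2 * s)).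
  { apply Rdiv_le_0_compat; [|lra]. apply Rmult_le_pos; [|apply Rlt_le, exp_pos].
    apply Rmult_le_pos; [apply pow_le; lra|apply pow2_ge_0]. }
  replace (M * ((E - 1) / (2 * - s))) with (M / (2 * s) - M * E / (2 * s)) by (field; lra).
  lra.
Qed.

Section AroundMax.

Variable r0 : R.
Hypothesis Hr0 : 1 < r0 < 2.
Hypothesis w_le_max : forall x, 1 <= x <= 2 -> w x <= w r0.

Lemma derive_at_max : w' r0 = 0.
Proof.
  apply (is_derive_local_max w 1 2 r0); [lra|apply w_der, Hr0|intros; apply w_le_max; lra].
Qed.

Lemma max_pos : 0 < w r0.
Proof. apply w_pos, Hr0. Qed.

Lemma max_Rpower_ge_half_p : p / 2 <= Rpower (w r0) (p - 2).
Proof. apply critical_value_ge; [exact Hr0|exact derive_at_max]. Qed.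

Lemma max_gt_1 : 1 < w r0.
Proof.
  apply (Rpower_gt_1_base _ (p - 2)); [apply max_pos|lra|].
  generalize max_Rpower_ge_half_p. lra.
Qed.

Lemma derive_nonzero_off_max t : 1 < t < 2 -> t <> r0 -> w' t <> 0.
Proof.
  intros Ht Hne H0. generalize derive_at_max. intros.
  destruct (Rlt_le_dec t r0).
  - apply (no_two_critical_points t r0); lra || assumption.
  - apply (no_two_critical_points r0 t); lra || assumption.
Qed.

Lemma derive_pos_before_max t : 1 < t < r0 -> 0 < w' t.
Proof.
  apply (derive_pos_of_nonvanishing w w' 1 r0).
  - lra.
  - rewrite w_1. apply max_pos.
  - intros x Hx. apply w_der. lra.
  - intros x _. apply w_cont.
  - intros x Hx. apply w'_cont. lra.
  - intros x Hx. apply derive_nonzero_off_max; lra.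
Qed.

Lemma derive_neg_after_max t : r0 < t < 2 -> w' t < 0.
Proof.
  intros Ht. enough (0 < - w' t) by lra. revert t Ht.
  apply (derive_pos_of_nonvanishing (fun x => - w x) (fun x => - w' x) r0 2).
  - lra.
  - rewrite w_2. generalize max_pos. lra.
  - intros x Hx. apply (is_derive_opp w x (w' x)), w_der. lra.
  - intros x _. apply continuity_pt_opp, w_cont.
  - intros x Hx. apply continuity_pt_opp, w'_cont. lra.
  - intros x Hx. generalize (derive_nonzero_off_max x ltac:(lra) ltac:(intros ->; lra)). lra.
Qed.

Lemma w_nondecreasing_before_max x y : 1 <= x -> x <= y -> y <= r0 -> w x <= w y.
Proof.
  intros Hx Hxy Hy. apply (derive_nonneg_le w w'); [lra| | |].
  - intros r Hr. apply w_der. lra.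
  - intros r _. apply w_cont.
  - intros r Hr. apply Rlt_le, derive_pos_before_max. lra.
Qed.

Lemma w_nonincreasing_after_max x y : r0 <= x -> x <= y -> y <= 2 -> w y <= w x.
Proof.
  intros Hx Hxy Hy. apply (derive_nonpos_ge w w'); [lra| | |].
  - intros r Hr. apply w_der. lra.
  - intros r _. apply w_cont.
  - intros r Hr. apply Rlt_le, derive_neg_after_max. lra.
Qed.

Lemma level_crossing_before_max th : 0 < th < w r0 ->
  exists a, 1 < a < r0 /\ w a = th /\
    (forall x, 1 <= x <= a -> w x <= th) /\ (forall x, a <= x <= r0 -> th <= w x).
Proof.
  intros Hth. destruct (IVT_gen w 1 r0 th w_cont) as [a [Ha Hwa]].
  { rewrite w_1, Rmin_left, Rmax_right; lra. }
  rewrite Rmin_left, Rmax_right in Ha by lra.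
  assert (a <> 1) by (intros ->; rewrite w_1 in Hwa; lra).
  assert (a <> r0) by (intros ->; lra).
  exists a. split; [lra|]. split; [exact Hwa|].
  split; intros x Hx; rewrite <- Hwa; apply w_nondecreasing_before_max; lra.
Qed.

Lemma level_crossing_after_max th : 0 < th < w r0 ->
  exists b, r0 < b < 2 /\ w b = th /\
    (forall x, b <= x <= 2 -> w x <= th) /\ (forall x, r0 <= x <= b -> th <= w x).
Proof.
  intros Hth. destruct (IVT_gen w r0 2 th w_cont) as [b [Hb Hwb]].
  { rewrite w_2, Rmin_right, Rmax_left; lra. }
  rewrite Rmin_left, Rmax_right in Hb by lra.
  assert (b <> 2) by (intros ->; rewrite w_2 in Hwb; lra).
  assert (b <> r0) by (intros ->; lra).
  exists b. split; [lra|]. split; [exact Hwb|].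
  split; intros x Hx; rewrite <- Hwb; apply w_nonincreasing_after_max; lra.
Qed.

Lemma shifted_energy_at_max : shifted_energy r0 = L * (potential (w r0) + potential_depth).
Proof. unfold shifted_energy, energy. rewrite derive_at_max. field. Qed.

Lemma shifted_energy_le_max r : 1 < r < 2 -> shifted_energy r <= beta * shifted_energy r0.
Proof.
  intros Hr. destruct (Rle_lt_dec r r0).
  - apply shifted_energy_growth; lra.
  - assert (energy r <= energy r0) by (apply energy_nonincreasing; lra).
    generalize beta_ge_1 (shifted_energy_nonneg r0 Hr0). unfold shifted_energy in *. nra.
Qed.

Lemma shifted_energy_max_le r : 1 < r < 2 -> shifted_energy r0 <= beta * shifted_energy r.
Proof.
  intros Hr. destruct (Rle_lt_dec r r0).
  - assert (energy r0 <= energy r) by (apply energy_nonincreasing; lra).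
    generalize beta_ge_1 (shifted_energy_nonneg r Hr). unfold shifted_energy in *. nra.
  - apply shifted_energy_growth; lra.
Qed.

Lemma abs_derive_le r : 1 < r < 2 -> Rabs (w' r) <= sqrt (2 * beta * shifted_energy r0).
Proof.
  intros Hr. rewrite <- sqrt_Rsqr_abs. apply sqrt_le_1_alt. rewrite Rsqr_pow2.
  generalize (derive_sq_le_shifted_energy r Hr) (shifted_energy_le_max r Hr). lra.
Qed.

(** * Upper bound on the mass for a bounded maximum *)

Definition decay_level : R := Rpower (1 + (p - 2) / 4) (/ (p - 2)).

Definition decay_rate : R := sqrt ((p - 2) / (2 * p)).

Definition derive_bound (Wb : R) : R := sqrt (2 * beta * (Rpower Wb p / p + potential_depth)).

Definition mass_bound (Wb : R) : R :=
  2 ^ (N - 1) * decay_level ^ 2 / decay_rate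
  + 2 ^ (N - 1) * Wb ^ 2 * (2 ^ N * derive_bound Wb / (Rpower decay_level (p - 1) - decay_level)).

Lemma decay_level_Rpower : Rpower decay_level (p - 2) = 1 + (p - 2) / 4.
Proof. apply Rpower_Rinv_r; lra. Qed.

Lemma decay_level_gt_1 : 1 < decay_level.
Proof.
  apply (Rpower_gt_1_base _ (p - 2)); [apply Rpower_pos|lra|]. rewrite decay_level_Rpower. lra.
Qed.

Lemma decay_level_gap_pos : 0 < Rpower decay_level (p - 1) - decay_level.
Proof.
  replace (p - 1) with (1 + (p - 2)) by ring.
  rewrite Rpower_1_plus, decay_level_Rpower by (generalize decay_level_gt_1; lra).
  generalize decay_level_gt_1. nra.
Qed.

Lemma derive_sq_ge_below_decay_level x : 1 < x < 2 -> w x <= decay_level ->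
  L * ((p - 2) / (2 * p)) * w x ^ 2 <= w' x ^ 2.
Proof.
  intros Hx Hlev. assert (Hw := w_pos x Hx).
  assert (Hq : Rpower (w x) (p - 2) <= 1 + (p - 2) / 4)
    by (rewrite <- decay_level_Rpower; apply Rle_Rpower_l; lra).
  assert (Hneg : Rpower (w x) (p - 2) / p - 1 / 2 <= - ((p - 2) / (4 * p))).
  { apply Rle_trans with ((1 + (p - 2) / 4) / p - 1 / 2); [|right; field; lra].
    apply Rplus_le_compat_r, Rmult_le_compat_r; [apply Rlt_le, Rinv_0_lt_compat; lra|exact Hq]. }
  generalize (energy_nonneg x Hx). unfold energy. rewrite potential_eq by exact Hw. intros HE.
  assert (Hw2 : 0 < w x ^ 2) by (apply pow_lt, Hw).
  assert (L * (w x ^ 2 * (Rpower (w x) (p - 2) / p - 1 / 2))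
            <= L * (w x ^ 2 * - ((p - 2) / (4 * p))))
    by (apply Rmult_le_compat_l; [lra|apply Rmult_le_compat_l; lra]).
  replace (L * ((p - 2) / (2 * p)) * w x ^ 2)
    with (- 2 * (L * (w x ^ 2 * - ((p - 2) / (4 * p))))) by (field; lra).
  lra.
Qed.

Lemma abs_derive_le_of_max_le Wb r : w r0 <= Wb -> 1 < r < 2 ->
  Rabs (w' r) <= sqrt L * derive_bound Wb.
Proof.
  intros HWb Hr. eapply Rle_trans; [apply abs_derive_le, Hr|].
  unfold derive_bound. rewrite <- sqrt_mult_alt by lra. apply sqrt_le_1_alt.
  rewrite shifted_energy_at_max.
  assert (potential (w r0) <= Rpower Wb p / p).
  { unfold potential. assert (Rpower (w r0) p <= Rpower Wb p)
      by (apply Rle_Rpower_l; [lra|split; [apply max_pos|exact HWb]]).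
    assert (Rpower (w r0) p / p <= Rpower Wb p / p)
      by (apply Rmult_le_compat_r; [apply Rlt_le, Rinv_0_lt_compat; lra|assumption]).
    generalize (pow2_ge_0 (w r0)). lra. }
  generalize beta_ge_1. intros.
  replace (2 * beta * (L * (potential (w r0) + potential_depth)))
    with ((2 * beta * L) * (potential (w r0) + potential_depth)) by ring.
  replace (L * (2 * beta * (Rpower Wb p / p + potential_depth)))
    with ((2 * beta * L) * (Rpower Wb p / p + potential_depth)) by ring.
  apply Rmult_le_compat_l; [nra|lra].
Qed.

Lemma decay_rate_pos : 0 < decay_rate.
Proof. apply sqrt_lt_R0, Rdiv_lt_0_compat; lra. Qed.

Lemma abs_derive_ge_below_decay_level x : 1 < x < 2 -> w x <= decay_level ->
  Rabs (sqrt L * decay_rate * w x) <= Rabs (w' x).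
Proof.
  intros Hx Hwx. apply Rsqr_le_abs_0. rewrite !Rsqr_pow2.
  replace ((sqrt L * decay_rate * w x) ^ 2) with (L * ((p - 2) / (2 * p)) * w x ^ 2).
  - apply derive_sq_ge_below_decay_level; assumption.
  - unfold decay_rate. rewrite !Rpow_mult_distr, (pow2_sqrt L) by lra.
    rewrite pow2_sqrt by (apply Rlt_le, Rdiv_lt_0_compat; lra). ring.
Qed.

Lemma decay_plateau_length_le Wb a b : w r0 <= Wb -> 1 < a -> a < b -> b < 2 ->
  (forall x, a <= x <= b -> decay_level <= w x) ->
  b - a <= 2 ^ N * derive_bound Wb / (Rpower decay_level (p - 1) - decay_level) / sqrt L.
Proof.
  intros HWb Ha Hab Hb Hhigh. assert (Hgap := decay_level_gap_pos).
  set (G := Rpower decay_level (p - 1) - decay_level) in *.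
  set (sL := sqrt L). assert (HsL : 0 < sL) by (apply sqrt_lt_R0; lra).
  assert (Hlen : (b - a) * (L * G) <= 2 ^ N * (sL * derive_bound Wb)).
  { apply (plateau_length_le_of_slope decay_level a b (sL * derive_bound Wb));
      [apply decay_level_gt_1|lra|lra|lra|exact Hhigh|apply abs_derive_le_of_max_le; lra..]. }
  assert (HsL2 : sL * sL = L) by (apply sqrt_sqrt; lra).
  apply (Rmult_le_reg_r (G * sL * sL)); [nra|].
  replace (2 ^ N * derive_bound Wb / G / sL * (G * sL * sL))
    with (2 ^ N * (sL * derive_bound Wb)) by (field; lra).
  rewrite <- HsL2 in Hlen. lra.
Qed.

(* Below decay_level, w decays exponentially at rate sqrt L * decay_rate; above
   it, w lives on a plateau of length O(1 / sqrt L). *)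
Lemma RInt_mass_density_le_of_max_le Wb : w r0 <= Wb ->
  RInt mass_density 1 2 <= mass_bound Wb / sqrt L.
Proof.
  intros HWb.
  assert (Hlev : 0 < decay_level < w r0).
  { split; [generalize decay_level_gt_1; lra|].
    apply (Rpower_lt_base _ _ (p - 2)); [generalize decay_level_gt_1; lra|apply max_pos|lra|].
    rewrite decay_level_Rpower. generalize max_Rpower_ge_half_p. lra. }
  destruct (level_crossing_before_max decay_level Hlev) as [a [Ha [Hwa [Hbelow_a Habove_a]]]].
  destruct (level_crossing_after_max decay_level Hlev) as [b [Hb [Hwb [Hbelow_b Habove_b]]]].
  assert (HsL : 0 < sqrt L) by (apply sqrt_lt_R0; lra).
  set (s := sqrt L * decay_rate). assert (Hs : 0 < s) by (generalize decay_rate_pos; unfold s; nra).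
  assert (Hleft : RInt mass_density 1 a <= 2 ^ (N - 1) * decay_level ^ 2 / (2 * s)).
  { rewrite <- Hwa. apply RInt_mass_density_left_tail; [lra|exact Hs|]. intros x Hx.
    generalize (abs_derive_ge_below_decay_level x ltac:(lra) (Hbelow_a x ltac:(lra)))
      (Rle_abs (s * w x)). fold s.
    rewrite (Rabs_pos_eq (w' x)) by (apply Rlt_le, derive_pos_before_max; lra). lra. }
  assert (Hright : RInt mass_density b 2 <= 2 ^ (N - 1) * decay_level ^ 2 / (2 * s)).
  { rewrite <- Hwb. apply RInt_mass_density_right_tail; [lra|exact Hs|]. intros x Hx.
    generalize (abs_derive_ge_below_decay_level x ltac:(lra) (Hbelow_b x ltac:(lra)))
      (Rle_abs (s * w x)). fold s.
    rewrite (Rabs_left (w' x)) by (apply derive_neg_after_max; lra). lra. }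
  assert (Hplateau := decay_plateau_length_le Wb a b HWb ltac:(lra) ltac:(lra) ltac:(lra)).
  lapply Hplateau; [clear Hplateau; intros Hplateau|].
  2: { intros x Hx. destruct (Rle_lt_dec x r0); [apply Habove_a|apply Habove_b]; lra. }
  assert (Hmid : RInt mass_density a b <= 2 ^ (N - 1) * Wb ^ 2 * (b - a))
    by (apply RInt_mass_density_le_sup; try lra; intros x Hx;
        apply Rle_trans with (w r0); [apply w_le_max; lra|exact HWb]).
  apply Rmult_le_compat_l with (r := 2 ^ (N - 1) * Wb ^ 2) in Hplateau;
    [|apply Rmult_le_pos; [apply pow_le; lra|apply pow2_ge_0]].
  assert (Hgap := decay_level_gap_pos). generalize decay_rate_pos. intros.
  rewrite (RInt_mass_density_split a b).
  replace (mass_bound Wb / sqrt L)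
    with (2 ^ (N - 1) * decay_level ^ 2 / (2 * s) + 2 ^ (N - 1) * decay_level ^ 2 / (2 * s)
          + 2 ^ (N - 1) * Wb ^ 2 * (2 ^ N * derive_bound Wb
                                    / (Rpower decay_level (p - 1) - decay_level) / sqrt L))
    by (unfold mass_bound, s; field; lra).
  lra.
Qed.

(** * Lower bound on the mass for p <= 6 *)

Lemma abs_derive_le_after_max r : r0 < r < 2 ->
  Rabs (w' r) <= 2 ^ (N - 1) * L * Rpower (w r0) (p - 1) * (r - r0).
Proof.
  intros Hr.
  destruct (MVT_interior flux (fun t => t ^ (N - 1) * (L * (w t - Rpower (w t) (p - 1)))) r0 r)
    as [c [Hc Hmvt]]; [lra| | |].
  - intros x Hx. apply is_derive_flux. lra.
  - intros x Hx. eapply continuity_pt_of_is_derive, is_derive_flux. lra.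
  - assert (Hflux0 : flux r0 = 0) by (unfold flux; rewrite derive_at_max; ring).
    rewrite Hflux0, Rminus_0_r in Hmvt.
    assert (Hgc : Rabs (c ^ (N - 1) * (L * (w c - Rpower (w c) (p - 1))))
                  <= 2 ^ (N - 1) * (L * Rpower (w r0) (p - 1))).
    { rewrite !Rabs_mult, (Rabs_pos_eq (c ^ (N - 1))), (Rabs_pos_eq L)
        by (lra || apply pow_le; lra).
      apply Rmult_le_compat; [apply pow_le; lra|apply Rmult_le_pos; [lra|apply Rabs_pos]| |].
      - apply pow_incr. lra.
      - apply Rmult_le_compat_l; [lra|]. replace (p - 1) with (1 + (p - 2)) by ring.
        apply abs_sub_Rpower_le; [split; [apply w_pos; lra|apply w_le_max; lra]| |lra].
        generalize max_gt_1. lra. }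
    assert (Hfr : Rabs (flux r) <= 2 ^ (N - 1) * L * Rpower (w r0) (p - 1) * (r - r0)).
    { rewrite Hmvt, Rabs_mult, (Rabs_pos_eq (r - r0)) by lra.
      replace (2 ^ (N - 1) * L * Rpower (w r0) (p - 1))
        with (2 ^ (N - 1) * (L * Rpower (w r0) (p - 1))) by ring.
      apply Rmult_le_compat_r; [lra|exact Hgc]. }
    eapply Rle_trans; [|exact Hfr]. unfold flux.
    rewrite Rabs_mult, (Rabs_pos_eq (r ^ (N - 1))) by (apply pow_le; lra).
    generalize (pow_R1_Rle r (N - 1) ltac:(lra)) (Rabs_pos (w' r)). nra.
Qed.

Definition half_width : R := / sqrt (2 ^ N * L * Rpower (w r0) (p - 2)).

Lemma half_width_radicand_pos : 0 < 2 ^ N * L * Rpower (w r0) (p - 2).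
Proof.
  apply Rmult_lt_0_compat; [apply Rmult_lt_0_compat; [apply pow_lt; lra|lra]|apply Rpower_pos].
Qed.

Lemma half_width_pos : 0 < half_width.
Proof. apply Rinv_0_lt_compat, sqrt_lt_R0, half_width_radicand_pos. Qed.

Lemma half_max_near_max r : r0 < r <= 2 -> r - r0 <= half_width -> w r0 / 2 <= w r.
Proof.
  intros Hr Hrd. assert (Hd := half_width_pos).
  destruct (MVT_interior w w' r0 r) as [c [Hc Hmvt]];
    [lra|intros; apply w_der; lra|intros; apply w_cont|].
  set (K := 2 ^ (N - 1) * L * Rpower (w r0) (p - 1)).
  assert (HK : 0 <= K)
    by (apply Rmult_le_pos; [apply Rmult_le_pos; [apply pow_le|]|apply Rlt_le, Rpower_pos]; lra).
  assert (Hc' : Rabs (w' c) <= K * half_width)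
    by (eapply Rle_trans; [apply abs_derive_le_after_max; lra|apply Rmult_le_compat_l; lra]).
  assert (Hstep : Rabs (w' c * (r - r0)) <= K * half_width * half_width).
  { rewrite Rabs_mult, (Rabs_pos_eq (r - r0)) by lra.
    apply Rmult_le_compat; [apply Rabs_pos|lra|exact Hc'|exact Hrd]. }
  assert (HK2 : K * half_width * half_width = w r0 / 2).
  { assert (HD := half_width_radicand_pos).
    assert (Hh2 : half_width * half_width = / (2 ^ N * L * Rpower (w r0) (p - 2)))
      by (unfold half_width; rewrite <- Rinv_mult, sqrt_sqrt by lra; reflexivity).
    rewrite Rmult_assoc, Hh2. unfold K.
    replace (p - 1) with (1 + (p - 2)) by ring. rewrite Rpower_1_plus by apply max_pos.
    rewrite pow_2_N. field.
    split; [apply Rgt_not_eq, Rpower_pos|split; [lra|apply pow_nonzero; lra]]. }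
  rewrite HK2 in Hstep. apply Rabs_le_between in Hstep. lra.
Qed.

Lemma max_plus_half_width_lt_2 : r0 + half_width < 2.
Proof.
  destruct (Rlt_le_dec (r0 + half_width) 2) as [|Hge]; [assumption|exfalso].
  generalize (half_max_near_max 2 ltac:(lra) ltac:(lra)) max_pos. rewrite w_2. lra.
Qed.

(* w >= w r0 / 2 on an interval of length half_width, and w r0 ^ (p - 2) <= w r0 ^ 4. *)
Lemma RInt_mass_density_ge : p <= 6 -> / (4 * sqrt (2 ^ N) * sqrt L) <= RInt mass_density 1 2.
Proof.
  intros Hp6. assert (HW := max_gt_1). assert (Hd := half_width_pos).
  assert (Hend := max_plus_half_width_lt_2).
  rewrite (RInt_mass_density_split r0 (r0 + half_width)).
  generalize (RInt_mass_density_nonneg 1 r0 ltac:(lra) ltac:(lra))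
    (RInt_mass_density_nonneg (r0 + half_width) 2 ltac:(lra) ltac:(lra)). intros.
  assert (Hmid : (w r0 / 2) ^ 2 * half_width <= RInt mass_density r0 (r0 + half_width)).
  { replace half_width with (r0 + half_width - r0) at 1 by ring.
    apply RInt_mass_density_ge_inf; [lra|lra|lra|lra|]. intros x Hx. apply half_max_near_max; lra. }
  assert (H2N : 0 < sqrt (2 ^ N)) by (apply sqrt_lt_R0, pow_lt; lra).
  assert (HsL : 0 < sqrt L) by (apply sqrt_lt_R0; lra).
  assert (Hwidth : sqrt (2 ^ N * L * Rpower (w r0) (p - 2)) <= sqrt (2 ^ N) * sqrt L * w r0 ^ 2).
  { rewrite <- sqrt_mult_alt by (apply pow_le; lra).
    rewrite <- (sqrt_pow2 (w r0 ^ 2)) by apply pow2_ge_0.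
    rewrite <- sqrt_mult_alt by (apply Rmult_le_pos; [apply pow_le|]; lra).
    apply sqrt_le_1_alt. apply Rmult_le_compat_l; [apply Rmult_le_pos; [apply pow_le|]; lra|].
    replace ((w r0 ^ 2) ^ 2) with (Rpower (w r0) (INR 4)) by (rewrite Rpower_pow; [ring|lra]).
    apply Rle_Rpower; [lra|simpl; lra]. }
  assert (Hsq := sqrt_lt_R0 _ half_width_radicand_pos).
  enough (/ (4 * sqrt (2 ^ N) * sqrt L) <= (w r0 / 2) ^ 2 * half_width) by lra.
  unfold half_width.
  replace (/ (4 * sqrt (2 ^ N) * sqrt L))
    with ((w r0 / 2) ^ 2 * / (sqrt (2 ^ N) * sqrt L * w r0 ^ 2)) by (field; lra).
  apply Rmult_le_compat_l; [apply pow2_ge_0|]. apply Rinv_le_contravar; [exact Hsq|exact Hwidth].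
Qed.

(** * A large maximum forces L to be bounded *)

Definition level_ratio : R := Rpower (/ (8 * beta)) (/ p).

Definition large_max : R :=
  Rpower (p + 2 / Rpower level_ratio (p - 2) + 8 * p * beta * potential_depth) (/ (p - 2)).

Definition sqrt_L_bound : R :=
  2 * level_ratio * sqrt (2 * p * beta)
  + 2 ^ (N + 1) * sqrt (4 * beta / p) / Rpower level_ratio (p - 1).

Lemma level_ratio_pos : 0 < level_ratio.
Proof. apply Rpower_pos. Qed.

Lemma level_ratio_Rpower : Rpower level_ratio p = / (8 * beta).
Proof.
  apply Rpower_Rinv_r; [|lra]. apply Rinv_0_lt_compat. generalize beta_ge_1. lra.
Qed.

Lemma large_max_terms_pos :
  0 < 2 / Rpower level_ratio (p - 2) /\ 0 <= 8 * p * beta * potential_depth.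
Proof.
  split; [apply Rdiv_lt_0_compat; [lra|apply Rpower_pos]|].
  apply Rmult_le_pos; [|apply potential_depth_nonneg].
  generalize beta_ge_1. intros. apply Rmult_le_pos; lra.
Qed.

Section LargeMax.

Hypothesis max_ge_large : large_max <= w r0.

Lemma large_max_Rpower_le :
  p + 2 / Rpower level_ratio (p - 2) + 8 * p * beta * potential_depth <= Rpower (w r0) (p - 2).
Proof.
  assert (Hc : 0 < p + 2 / Rpower level_ratio (p - 2) + 8 * p * beta * potential_depth)
    by (generalize large_max_terms_pos; lra).
  rewrite <- (Rpower_Rinv_r _ (p - 2) Hc) by lra.
  apply Rle_Rpower_l; [lra|]. split; [apply Rpower_pos|exact max_ge_large].
Qed.

Lemma max_Rpower_ge_p : p <= Rpower (w r0) (p - 2).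
Proof. generalize large_max_Rpower_le large_max_terms_pos. lra. Qed.

Lemma max_Rpower_ge_level : 2 / Rpower level_ratio (p - 2) <= Rpower (w r0) (p - 2).
Proof. generalize large_max_Rpower_le large_max_terms_pos. lra. Qed.

Lemma max_Rpower_ge_depth : 8 * p * beta * potential_depth <= Rpower (w r0) (p - 2).
Proof. generalize large_max_Rpower_le large_max_terms_pos. lra. Qed.

Lemma max_Rpower_p_ge : Rpower (w r0) (p - 2) <= Rpower (w r0) p.
Proof. apply Rle_Rpower; [generalize max_gt_1; lra|lra]. Qed.

Lemma level_Rpower_ge : 2 <= Rpower (level_ratio * w r0) (p - 2).
Proof.
  rewrite <- Rpower_mult_distr by (apply level_ratio_pos || apply max_pos).
  assert (Hr := Rpower_pos level_ratio (p - 2)).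
  assert (H := max_Rpower_ge_level).
  apply (Rmult_le_compat_l (Rpower level_ratio (p - 2))) in H; [|lra].
  replace (Rpower level_ratio (p - 2) * (2 / Rpower level_ratio (p - 2))) with 2 in H
    by (field; lra).
  exact H.
Qed.

Lemma level_bounds : 1 < level_ratio * w r0 < w r0.
Proof.
  split.
  - apply (Rpower_gt_1_base _ (p - 2)); [|lra|generalize level_Rpower_ge; lra].
    apply Rmult_lt_0_compat; [apply level_ratio_pos|apply max_pos].
  - assert (level_ratio < 1).
    { apply (Rpower_lt_base _ _ p); [apply level_ratio_pos|lra|lra|].
      rewrite level_ratio_Rpower, Rpower_base_1. rewrite <- Rinv_1.
      apply Rinv_lt_contravar; generalize beta_ge_1; lra. }
    generalize max_pos level_ratio_pos. nra.
Qed.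

Lemma level_Rpower_p : Rpower (level_ratio * w r0) p = Rpower (w r0) p / (8 * beta).
Proof.
  rewrite <- Rpower_mult_distr by (apply level_ratio_pos || apply max_pos).
  rewrite level_ratio_Rpower. field. generalize beta_ge_1. lra.
Qed.

Lemma potential_max_ge : Rpower (w r0) p / (2 * p) <= potential (w r0).
Proof.
  assert (HW := max_pos). rewrite potential_eq by exact HW.
  replace p with (2 + (p - 2)) at 1 by ring. rewrite Rpower_2_plus by exact HW.
  assert (Hq := max_Rpower_ge_p).
  replace (w r0 ^ 2 * Rpower (w r0) (p - 2) / (2 * p))
    with (w r0 ^ 2 * (Rpower (w r0) (p - 2) / (2 * p))) by (field; lra).
  apply Rmult_le_compat_l; [apply pow2_ge_0|].
  apply Rle_trans with (Rpower (w r0) (p - 2) / (2 * p) + (Rpower (w r0) (p - 2) - p) / (2 * p)).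
  - assert (0 <= (Rpower (w r0) (p - 2) - p) / (2 * p)) by (apply Rdiv_le_0_compat; lra). lra.
  - right. field. lra.
Qed.

Lemma potential_depth_le_max : potential_depth <= Rpower (w r0) p / (8 * p * beta).
Proof.
  assert (Hb := beta_ge_1).
  apply (Rmult_le_reg_r (8 * p * beta)); [nra|].
  replace (Rpower (w r0) p / (8 * p * beta) * (8 * p * beta)) with (Rpower (w r0) p)
    by (field; split; lra).
  generalize max_Rpower_ge_depth max_Rpower_p_ge. lra.
Qed.

(* Below level_ratio * w r0 the potential is negligible against the energy at the
   maximum, which is of order L * w r0 ^ p. *)
Lemma derive_sq_ge_below_level x : 1 < x < 2 -> w x <= level_ratio * w r0 ->
  L * Rpower (w r0) p / (2 * p * beta) <= w' x ^ 2.
Proof.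
  intros Hx Hwx. set (X := Rpower (w r0) p). assert (Hb := beta_ge_1).
  assert (HX : 0 < X) by apply Rpower_pos.
  assert (Hpot : potential (w x) <= X / (8 * p * beta)).
  { unfold potential. assert (Rpower (w x) p <= X / (8 * beta)).
    { unfold X. rewrite <- level_Rpower_p.
      apply Rle_Rpower_l; [lra|split; [apply w_pos, Hx|exact Hwx]]. }
    replace (X / (8 * p * beta)) with (X / (8 * beta) / p) by (field; lra).
    assert (Rpower (w x) p / p <= X / (8 * beta) / p)
      by (apply Rmult_le_compat_r; [apply Rlt_le, Rinv_0_lt_compat; lra|assumption]).
    generalize (pow2_ge_0 (w x)). lra. }
  assert (HSE : L * X / (2 * p * beta) <= shifted_energy x).
  { apply (Rmult_le_reg_r beta); [lra|].
    replace (L * X / (2 * p * beta) * beta) with (L * (X / (2 * p))) by (field; lra).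
    rewrite (Rmult_comm (shifted_energy x)). eapply Rle_trans; [|apply shifted_energy_max_le, Hx].
    rewrite shifted_energy_at_max. apply Rmult_le_compat_l; [lra|].
    generalize potential_max_ge potential_depth_nonneg. fold X. lra. }
  assert (Hdepth := potential_depth_le_max). fold X in Hdepth.
  assert (Hw' : w' x ^ 2 = 2 * (shifted_energy x - L * potential_depth - L * potential (w x)))
    by (unfold shifted_energy, energy; field).
  assert (L * (X / (8 * p * beta)) = L * X / (2 * p * beta) / 4) by (field; lra).
  assert (L * potential_depth <= L * (X / (8 * p * beta))) by (apply Rmult_le_compat_l; lra).
  assert (L * potential (w x) <= L * (X / (8 * p * beta))) by (apply Rmult_le_compat_l; lra).
  lra.
Qed.

Lemma abs_derive_le_of_large_max r : 1 < r < 2 ->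
  Rabs (w' r) <= sqrt L * sqrt (4 * beta / p) * Rpower (w r0) (p / 2).
Proof.
  intros Hr. eapply Rle_trans; [apply abs_derive_le, Hr|].
  set (X := Rpower (w r0) p). assert (Hb := beta_ge_1).
  assert (HX : 0 < X) by apply Rpower_pos.
  assert (HY : Rpower (w r0) (p / 2) ^ 2 = X)
    by (unfold X; simpl; rewrite Rmult_1_r, <- Rpower_plus; f_equal; field).
  rewrite <- (sqrt_pow2 (Rpower (w r0) (p / 2))) by (apply Rlt_le, Rpower_pos).
  rewrite HY, <- (sqrt_mult_alt L) by lra.
  rewrite <- sqrt_mult_alt by (apply Rmult_le_pos; [lra|apply Rlt_le, Rdiv_lt_0_compat; lra]).
  apply sqrt_le_1_alt. rewrite shifted_energy_at_max.
  assert (potential (w r0) + potential_depth <= 2 * X / p).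
  { assert (potential (w r0) <= X / p) by (unfold potential, X; generalize (pow2_ge_0 (w r0)); lra).
    assert (X / (8 * p * beta) <= X / p).
    { apply Rmult_le_compat_l; [lra|]. apply Rinv_le_contravar; [lra|].
      assert (p * 1 <= p * beta) by (apply Rmult_le_compat_l; lra). lra. }
    generalize potential_depth_le_max. fold X. intros.
    replace (2 * X / p) with (X / p + X / p) by (field; lra). lra. }
  replace (L * (4 * beta / p) * X) with ((2 * beta * L) * (2 * X / p)) by (field; lra).
  replace (2 * beta * (L * (potential (w r0) + potential_depth)))
    with ((2 * beta * L) * (potential (w r0) + potential_depth)) by ring.
  apply Rmult_le_compat_l; nra.
Qed.

Lemma max_le_Rpower_half : w r0 <= Rpower (w r0) (p / 2).
Proof.
  rewrite <- (Rpower_1 (w r0)) at 1 by apply max_pos.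
  apply Rle_Rpower; [generalize max_gt_1; lra|lra].
Qed.

Lemma crossing_length_le_of_large_max c d : 1 <= c -> c < d -> d <= 2 ->
  (forall x, c < x < d -> w x <= level_ratio * w r0) ->
  Rabs (w d - w c) <= level_ratio * w r0 ->
  d - c <= level_ratio * sqrt (2 * p * beta) / sqrt L.
Proof.
  intros Hc Hcd Hd Hlow Hjump. assert (Hb := beta_ge_1).
  set (T := sqrt (2 * p * beta)). assert (HT : 0 < T) by (apply sqrt_lt_R0; nra).
  set (sL := sqrt L). assert (HsL : 0 < sL) by (apply sqrt_lt_R0; lra).
  set (Y := Rpower (w r0) (p / 2)). assert (HY : 0 < Y) by apply Rpower_pos.
  assert (Hslope : forall x, c < x < d -> sL * Y / T <= Rabs (w' x)).
  { intros x Hx. rewrite <- (Rabs_pos_eq (sL * Y / T)) by (apply Rlt_le, Rdiv_lt_0_compat; nra).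
    apply Rsqr_le_abs_0. rewrite !Rsqr_pow2.
    replace ((sL * Y / T) ^ 2) with (L * Rpower (w r0) p / (2 * p * beta)).
    - apply derive_sq_ge_below_level; [lra|apply Hlow, Hx].
    - assert (HsL2 : sL ^ 2 = L) by (apply pow2_sqrt; lra).
      assert (HT2 : T ^ 2 = 2 * p * beta) by (apply pow2_sqrt; nra).
      assert (HY2 : Y ^ 2 = Rpower (w r0) p)
        by (unfold Y; simpl; rewrite Rmult_1_r, <- Rpower_plus; f_equal; field).
      replace ((sL * Y / T) ^ 2) with (sL ^ 2 * Y ^ 2 / T ^ 2) by (field; lra).
      rewrite HsL2, HY2, HT2. reflexivity. }
  assert (Hlen := MVT_length_bound w w' c d (sL * Y / T) Hcd).
  lapply Hlen; [clear Hlen; intros Hlen|intros; apply w_der; lra].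
  specialize (Hlen (fun x _ => w_cont x) Hslope).
  apply (Rmult_le_reg_l (sL * Y / T)); [apply Rdiv_lt_0_compat; nra|].
  replace (sL * Y / T * (level_ratio * T / sL)) with (level_ratio * Y) by (field; lra).
  generalize max_le_Rpower_half level_ratio_pos. fold Y. intros. nra.
Qed.

Lemma plateau_length_le_of_large_max a b : 1 < a -> a < b -> b < 2 ->
  (forall x, a <= x <= b -> level_ratio * w r0 <= w x) ->
  b - a <= 2 ^ (N + 1) * sqrt (4 * beta / p) / Rpower level_ratio (p - 1) / sqrt L.
Proof.
  intros Ha Hab Hb Hhigh. assert (Hbeta := beta_ge_1).
  set (th := level_ratio * w r0). assert (Hth := level_bounds). fold th in Hth.
  set (sL := sqrt L). assert (HsL : 0 < sL) by (apply sqrt_lt_R0; lra).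
  set (U := sqrt (4 * beta / p)). assert (HU : 0 < U) by (apply sqrt_lt_R0, Rdiv_lt_0_compat; lra).
  set (Y := Rpower (w r0) (p / 2)). assert (HY : 0 < Y) by apply Rpower_pos.
  set (R1 := Rpower level_ratio (p - 1)). assert (HR1 : 0 < R1) by apply Rpower_pos.
  assert (Hpl : (b - a) * (L * (Rpower th (p - 1) - th)) <= 2 ^ N * (sL * U * Y)).
  { apply plateau_length_le_of_slope; [lra|lra|lra|lra|exact Hhigh| |];
      apply abs_derive_le_of_large_max; lra. }
  assert (Hgap : R1 * Y / 2 <= Rpower th (p - 1) - th).
  { assert (Hth1 : Rpower th (p - 1) = th * Rpower th (p - 2))
      by (replace (p - 1) with (1 + (p - 2)) by ring; apply Rpower_1_plus; lra).
    assert (R1 * Y <= Rpower th (p - 1)).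
    { unfold th, R1. rewrite <- Rpower_mult_distr by (apply level_ratio_pos || apply max_pos).
      apply Rmult_le_compat_l; [apply Rlt_le, Rpower_pos|].
      apply Rle_Rpower; [generalize max_gt_1; lra|lra]. }
    generalize level_Rpower_ge. fold th. nra. }
  assert (HsL2 : sL * sL = L) by (apply sqrt_sqrt; lra).
  assert (Hprod : (b - a) * (sL * (R1 * Y / 2)) <= 2 ^ N * (U * Y)).
  { apply (Rmult_le_reg_l sL); [exact HsL|].
    apply Rle_trans with ((b - a) * (L * (Rpower th (p - 1) - th))).
    - rewrite <- HsL2.
      replace (sL * ((b - a) * (sL * (R1 * Y / 2)))) with ((b - a) * (sL * sL * (R1 * Y / 2)))
        by ring.
      apply Rmult_le_compat_l; [lra|]. apply Rmult_le_compat_l; [nra|exact Hgap].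
    - replace (sL * (2 ^ N * (U * Y))) with (2 ^ N * (sL * U * Y)) by ring. exact Hpl. }
  apply (Rmult_le_reg_r (sL * (R1 * Y / 2)));
    [apply Rmult_lt_0_compat; [lra|apply Rdiv_lt_0_compat; nra]|].
  replace (2 ^ (N + 1) * U / R1 / sL * (sL * (R1 * Y / 2))) with (2 ^ N * (U * Y))
    by (rewrite pow_add; field; lra).
  exact Hprod.
Qed.

(* Splitting [1, 2] at the level level_ratio * w r0 into two steep tails and a
   short plateau. *)
Lemma sqrt_L_le_of_large_max : sqrt L <= sqrt_L_bound.
Proof.
  set (th := level_ratio * w r0). assert (Hth := level_bounds). fold th in Hth.
  assert (HsL : 0 < sqrt L) by (apply sqrt_lt_R0; lra).
  destruct (level_crossing_before_max th) as [a [Ha [Hwa [Hbelow_a Habove_a]]]]; [lra|].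
  destruct (level_crossing_after_max th) as [b [Hb [Hwb [Hbelow_b Habove_b]]]]; [lra|].
  assert (Hleft : a - 1 <= level_ratio * sqrt (2 * p * beta) / sqrt L).
  { apply crossing_length_le_of_large_max; try lra.
    - intros x Hx. apply Hbelow_a. lra.
    - rewrite Hwa, w_1, Rminus_0_r, Rabs_pos_eq by lra. apply Rle_refl. }
  assert (Hright : 2 - b <= level_ratio * sqrt (2 * p * beta) / sqrt L).
  { apply crossing_length_le_of_large_max; try lra.
    - intros x Hx. apply Hbelow_b. lra.
    - rewrite Hwb, w_2, Rminus_0_l, Rabs_Ropp, Rabs_pos_eq by lra. apply Rle_refl. }
  assert (Hmid := plateau_length_le_of_large_max a b ltac:(lra) ltac:(lra) ltac:(lra)).
  lapply Hmid; [clear Hmid; intros Hmid|].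
  2: { intros x Hx. destruct (Rle_lt_dec x r0); [apply Habove_a|apply Habove_b]; lra. }
  apply (Rmult_le_reg_r (/ sqrt L)); [apply Rinv_0_lt_compat, HsL|].
  rewrite Rinv_r by lra. unfold sqrt_L_bound.
  replace ((2 * level_ratio * sqrt (2 * p * beta)
            + 2 ^ (N + 1) * sqrt (4 * beta / p) / Rpower level_ratio (p - 1)) * / sqrt L)
    with (2 * (level_ratio * sqrt (2 * p * beta) / sqrt L)
          + 2 ^ (N + 1) * sqrt (4 * beta / p) / Rpower level_ratio (p - 1) / sqrt L)
    by (field; split; [lra|apply Rgt_not_eq, Rpower_pos]).
  lra.
Qed.

End LargeMax.

End AroundMax.

Lemma RInt_mass_density_lower : p <= 6 -> / (4 * sqrt (2 ^ N) * sqrt L) <= RInt mass_density 1 2.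
Proof.
  intros Hp6. destruct exists_interior_max as [r0 [Hr0 Hmax]].
  apply (RInt_mass_density_ge r0 Hr0 Hmax Hp6).
Qed.

Lemma RInt_mass_density_upper : sqrt_L_bound ^ 2 < L ->
  RInt mass_density 1 2 <= mass_bound large_max / sqrt L.
Proof.
  intros HL'. destruct exists_interior_max as [r0 [Hr0 Hmax]].
  destruct (Rle_lt_dec large_max (w r0)) as [Hlarge|Hsmall].
  - exfalso. generalize (sqrt_L_le_of_large_max r0 Hr0 Hmax Hlarge) (sqrt_pos L).
    assert (sqrt L * sqrt L = L) by (apply sqrt_sqrt; lra). nra.
  - apply (RInt_mass_density_le_of_max_le r0 Hr0 Hmax). lra.
Qed.

End RescaledProblem.

(** * Rescaling to a fixed nonlinearity *)

Definition clamp (a b r : R) : R := Rmax a (Rmin b r).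

Lemma clamp_in (a b r : R) : a <= b -> a <= clamp a b r <= b.
Proof. intros Hab. unfold clamp, Rmax, Rmin. repeat destruct Rle_dec; lra. Qed.

Lemma clamp_id (a b r : R) : a <= r <= b -> clamp a b r = r.
Proof. intros Hr. unfold clamp, Rmax, Rmin. repeat destruct Rle_dec; lra. Qed.

Lemma clamp_lipschitz (a b x y : R) : Rabs (clamp a b y - clamp a b x) <= Rabs (y - x).
Proof.
  unfold clamp, Rmax, Rmin. repeat destruct Rle_dec; unfold Rabs; repeat destruct Rcase_abs; lra.
Qed.

Lemma clamp_locally_id (a b r : R) : a < r < b -> locally r (fun t => clamp a b t = t).
Proof.
  intros Hr. assert (He : 0 < Rmin (r - a) (b - r)) by (apply Rmin_pos; lra).
  exists (mkposreal _ He). intros y Hy. apply clamp_id.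
  change (Rabs (y - r) < Rmin (r - a) (b - r)) in Hy. apply Rabs_def2 in Hy.
  generalize (Rmin_l (r - a) (b - r)) (Rmin_r (r - a) (b - r)). lra.
Qed.

Lemma continuity_pt_clamp_ext (v : R -> R) (a b : R) : a <= b ->
  (forall r, a <= r <= b ->
     filterlim v (within (fun x => a <= x <= b) (locally r)) (locally (v r))) ->
  forall r, continuity_pt (fun t => v (clamp a b t)) r.
Proof.
  intros Hab Hv r. apply continuity_pt_filterlim.
  apply (filterlim_comp _ _ _ (clamp a b) v (locally r)
           (within (fun x => a <= x <= b) (locally (clamp a b r)))).
  - intros P [eps HP]. exists eps. intros y Hy. apply HP.
    + change (Rabs (clamp a b y - clamp a b r) < eps).
      eapply Rle_lt_trans; [apply clamp_lipschitz|exact Hy].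
    + apply clamp_in, Hab.
  - apply Hv, clamp_in, Hab.
Qed.

Section Rescaling.

Variables (N : nat) (p L : R) (v : R -> R).
Hypothesis Hp : 2 < p.
Hypothesis HL : 0 < L.
Hypothesis Hsol : radial_pos_solution N p L v.

Definition scale : R := Rpower L (/ (p - 2)).

(* Extended by its boundary values outside [1, 2], so that it is continuous on
   all of R as Section RescaledProblem assumes. *)
Definition rescaled (t : R) : R := v (clamp 1 2 t) / scale.
Definition rescaled' (t : R) : R := Derive v t / scale.
Definition rescaled'' (t : R) : R := Derive (Derive v) t / scale.

Lemma scale_pos : 0 < scale.
Proof. apply Rpower_pos. Qed.

Lemma rescaled_cont r : continuity_pt rescaled r.
Proof.
  destruct Hsol as [Hc _]. unfold rescaled.
  apply (continuity_pt_mult (fun t => v (clamp 1 2 t)) (fun _ => / scale)).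
  - apply continuity_pt_clamp_ext; [lra|exact Hc].
  - apply continuity_pt_const. intros x y. reflexivity.
Qed.

Lemma rescaled_1 : rescaled 1 = 0.
Proof.
  destruct Hsol as [_ [H1 _]]. unfold rescaled. rewrite clamp_id, H1 by lra. apply Rdiv_0_l.
Qed.

Lemma rescaled_2 : rescaled 2 = 0.
Proof.
  destruct Hsol as [_ [_ [H2 _]]]. unfold rescaled. rewrite clamp_id, H2 by lra. apply Rdiv_0_l.
Qed.

Lemma rescaled_pos r : 1 < r < 2 -> 0 < rescaled r.
Proof.
  intros Hr. destruct Hsol as [_ [_ [_ H]]]. unfold rescaled. rewrite clamp_id by lra.
  apply Rdiv_lt_0_compat; [apply H, Hr|apply scale_pos].
Qed.

Lemma is_derive_rescaled r : 1 < r < 2 -> is_derive rescaled r (rescaled' r).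
Proof.
  intros Hr. destruct Hsol as [_ [_ [_ H]]]. destruct (H r Hr) as [_ [Hd _]].
  unfold rescaled, rescaled'. apply (is_derive_ext_loc (fun t => v t / scale)).
  - apply (filter_imp (fun t => clamp 1 2 t = t)); [|apply clamp_locally_id, Hr].
    intros t ->. reflexivity.
  - auto_derive; [exact Hd|]. change (Derive (fun x => v x) r) with (Derive v r).
    field. apply Rgt_not_eq, scale_pos.
Qed.

Lemma is_derive_rescaled' r : 1 < r < 2 -> is_derive rescaled' r (rescaled'' r).
Proof.
  intros Hr. destruct Hsol as [_ [_ [_ H]]]. destruct (H r Hr) as [_ [_ [Hd _]]].
  unfold rescaled', rescaled''. auto_derive; [exact Hd|].
  change (Derive (fun x => Derive v x) r) with (Derive (Derive v) r).
  field. apply Rgt_not_eq, scale_pos.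
Qed.

Lemma rescaled_ode r : 1 < r < 2 ->
  rescaled'' r = L * (rescaled r - Rpower (rescaled r) (p - 1)) - (INR N - 1) / r * rescaled' r.
Proof.
  intros Hr. destruct Hsol as [_ [_ [_ H]]]. destruct (H r Hr) as [Hv [_ [_ He]]].
  unfold rescaled, rescaled', rescaled''. rewrite clamp_id by lra.
  assert (Hs := scale_pos).
  assert (Hscale : Rpower scale (p - 2) = L) by (apply Rpower_Rinv_r; lra).
  assert (E : Rpower (v r) (p - 1) = scale * L * Rpower (v r / scale) (p - 1)).
  { replace (v r) with (scale * (v r / scale)) at 1 by (field; lra).
    rewrite <- Rpower_mult_distr by (try apply Rdiv_lt_0_compat; lra).
    replace (p - 1) with (1 + (p - 2)) at 1 by ring. rewrite Rpower_1_plus, Hscale by lra. ring. }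
  rewrite E in He. apply (Rmult_eq_reg_l scale); [|lra].
  replace (scale * (Derive (Derive v) r / scale)) with (Derive (Derive v) r) by (field; lra).
  replace (scale * (L * (v r / scale - Rpower (v r / scale) (p - 1))
                    - (INR N - 1) / r * (Derive v r / scale)))
    with (L * v r - scale * L * Rpower (v r / scale) (p - 1) - (INR N - 1) / r * Derive v r)
    by (field; lra).
  lra.
Qed.

Lemma radial_mass_rescaled :
  radial_mass N v = Rpower L (2 / (p - 2)) * RInt (mass_density N rescaled) 1 2.
Proof.
  unfold radial_mass. assert (Hs := scale_pos).
  assert (Es : Rpower L (2 / (p - 2)) = scale ^ 2).
  { unfold scale. rewrite <- Rpower_pow by apply Rpower_pos. rewrite Rpower_mult.
    f_equal. simpl. field. lra. }
  rewrite Es. transitivity (scal (scale ^ 2) (RInt (mass_density N rescaled) 1 2)); [|reflexivity].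
  rewrite <- (RInt_scal (V := R_CompleteNormedModule))
    by (apply ex_RInt_mass_density, rescaled_cont).
  apply RInt_ext. intros x Hx. rewrite Rmin_left, Rmax_right in Hx by lra.
  unfold mass_density, rescaled. rewrite clamp_id by lra.
  unfold scal; simpl; unfold mult; simpl. field. lra.
Qed.

End Rescaling.

Definition mass_exponent (p : R) : R := 2 / (p - 2) - / 2.

Lemma mass_exponent_sign (p : R) : 2 < p ->
  (p < 6 -> 0 < mass_exponent p) /\ (6 < p -> mass_exponent p < 0).
Proof.
  intros Hp. unfold mass_exponent.
  replace (2 / (p - 2) - / 2) with ((6 - p) / (2 * (p - 2))) by (field; lra).
  split; intros H.
  - apply Rdiv_lt_0_compat; lra.
  - apply Rdiv_neg_pos; lra.
Qed.

Lemma Rpower_mass_exponent_6 (L : R) : Rpower L (mass_exponent 6) = 1.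
Proof.
  unfold Rpower, mass_exponent. replace (2 / (6 - 2) - / 2) with 0 by field.
  rewrite Rmult_0_l. apply exp_0.
Qed.

Lemma subcritical_lt_6 (N : nat) (p : R) : (3 <= N)%nat -> p < 2 * INR N / (INR N - 2) -> p < 6.
Proof.
  intros HN Hcrit. apply le_INR in HN. simpl in HN.
  enough (2 * INR N / (INR N - 2) <= 6) by lra.
  apply (Rmult_le_reg_r (INR N - 2)); [lra|].
  replace (2 * INR N / (INR N - 2) * (INR N - 2)) with (2 * INR N) by (field; lra). lra.
Qed.

Lemma radial_mass_bounds (N : nat) (p : R) (u : R -> R -> R) : (2 <= N)%nat -> 2 < p ->
  (forall lam, 0 < lam -> radial_pos_solution N p lam (u lam)) ->
  exists K C c, 0 < c /\ forall L, K < L ->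
    0 <= radial_mass N (u L) /\
    (p <= 6 -> c * Rpower L (mass_exponent p) <= radial_mass N (u L)) /\
    radial_mass N (u L) <= C * Rpower L (mass_exponent p).
Proof.
  intros HN Hp Hu.
  exists (sqrt_L_bound N p ^ 2), (mass_bound N p (large_max N p)), (/ (4 * sqrt (2 ^ N))).
  split; [apply Rinv_0_lt_compat, Rmult_lt_0_compat; [lra|apply sqrt_lt_R0, pow_lt; lra]|].
  intros L HK. assert (HL : 0 < L) by (generalize (pow2_ge_0 (sqrt_L_bound N p)); lra).
  set (v := u L). assert (Hsol := Hu L HL). fold v in Hsol.
  rewrite (radial_mass_rescaled N p L v Hp Hsol).
  assert (HsL : 0 < sqrt L) by (apply sqrt_lt_R0; lra).
  assert (Hpow : Rpower L (mass_exponent p) = Rpower L (2 / (p - 2)) / sqrt L).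
  { unfold mass_exponent, Rminus at 1. rewrite Rpower_plus, Rpower_Ropp, Rpower_sqrt by lra.
    reflexivity. }
  assert (HR := Rpower_pos L (2 / (p - 2))).
  pose proof (rescaled_cont N p L v Hsol) as Hc.
  pose proof (rescaled_1 N p L v Hsol) as H1. pose proof (rescaled_2 N p L v Hsol) as H2.
  pose proof (rescaled_pos N p L v Hsol) as Hpos.
  pose proof (is_derive_rescaled N p L v Hsol) as Hd1.
  pose proof (is_derive_rescaled' N p L v Hsol) as Hd2.
  pose proof (rescaled_ode N p L v Hp HL Hsol) as Hode.
  rewrite Hpow. split; [|split].
  - apply Rmult_le_pos; [lra|apply RInt_mass_density_nonneg; [exact Hc|lra|lra]].
  - intros Hp6.
    assert (Hl := RInt_mass_density_lower N p L _ _ _ HN Hp HL Hc H1 H2 Hpos Hd1 Hd2 Hode Hp6).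
    replace (/ (4 * sqrt (2 ^ N)) * (Rpower L (2 / (p - 2)) / sqrt L))
      with (Rpower L (2 / (p - 2)) * / (4 * sqrt (2 ^ N) * sqrt L))
      by (field; split; [lra|apply Rgt_not_eq, sqrt_lt_R0, pow_lt; lra]).
    apply Rmult_le_compat_l; lra.
  - assert (Hup := RInt_mass_density_upper N p L _ _ _ HN Hp HL Hc H1 H2 Hpos Hd1 Hd2 Hode HK).
    replace (mass_bound N p (large_max N p) * (Rpower L (2 / (p - 2)) / sqrt L))
      with (Rpower L (2 / (p - 2)) * (mass_bound N p (large_max N p) / sqrt L)) by (field; lra).
    apply Rmult_le_compat_l; lra.
Qed.

Theorem theorem2p7 (N : nat) (p : R) (u : R -> R -> R) :
  (2 <= N)%nat -> 2 < p ->
  ((3 <= N)%nat -> p < 2 * INR N / (INR N - 2)) ->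
  (forall lam, 0 < lam -> radial_pos_solution N p lam (u lam)) ->
  ((((N = 2)%nat /\ p < 6) \/ (3 <= N)%nat) ->
      is_lim (fun lam => radial_mass N (u lam)) p_infty p_infty) /\
  ((N = 2)%nat -> p = 6 ->
      exists l, 0 < l /\ liminf_pinfty_is (fun lam => radial_mass N (u lam)) l) /\
  ((N = 2)%nat -> 6 < p ->
      is_lim (fun lam => radial_mass N (u lam)) p_infty 0).
Proof.
  intros HN Hp Hcrit Hsol.
  destruct (radial_mass_bounds N p u HN Hp Hsol) as [K [C [c [Hc Hb]]]].
  destruct (mass_exponent_sign p Hp) as [Hpos Hneg].
  split; [|split].
  - intros Hcase.
    assert (Hp6 : p < 6)
      by (destruct Hcase as [[_ H]|H]; [exact H|exact (subcritical_lt_6 N p H (Hcrit H))]).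
    apply (is_lim_pinfty_of_ge_power _ c (mass_exponent p) K Hc (Hpos Hp6)).
    intros L HL. apply (Hb L HL). lra.
  - intros _ ->. apply (liminf_pinfty_of_bounded _ c C K Hc). intros L HL.
    destruct (Hb L HL) as [_ [Hlow Hup]]. rewrite Rpower_mass_exponent_6, Rmult_1_r in Hlow, Hup.
    split; [apply Hlow; lra|exact Hup].
  - intros _ Hp6. apply (is_lim_0_of_le_power _ C (mass_exponent p) K (Hneg Hp6)).
    intros L HL. destruct (Hb L HL) as [H0 [_ Hup]]. split; assumption.
Qed.
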